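(* Let $f\colon[a,b]\to\mathbb{R}$ be Laplace integrable on $[a,b]$ and let $F(x)=\int_a^xf$ for $x\in[a,b]$. Then $LD_1F=f$ almost everywhere on $[a,b]$.
   Context: Laplace derivative: for $F$ Perron integrable near $x$, $LD_1F(x)$ is the common value, when both exist and are equal, of $\lim_{s\to\infty}s^2\int_0^\delta e^{-st}[F(x+t)-F(x)]dt$ and $\lim_{s\to\infty}(-s^2)\int_0^\delta e^{-st}[F(x-t)-F(x)]dt$ for some $\delta>0$ (one-sided at endpoints). Lower/upper derivates $\underline{LD}_1,\overline{LD}_1$ use $\liminf$/$\limsup$, minimum/maximum over the two sides. Laplace integral: a major function of $f$ is a continuous $U$ on $[a,b]$ with $\underline{LD}_1U\geqslant f$ and $\underline{LD}_1U>-\infty$ everywhere; a minor function is a continuous $V$ with $\overline{LD}_1V\leqslant f$ and $\overline{LD}_1V<\infty$ everywhere; $f$ is Laplace integrable if $\sup_V(V(b)-V(a))=\inf_U(U(b)-U(a))$ is finite, the value being $\int_a^bf$. *)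

From Stdlib Require Import Reals ClassicalEpsilon.
From Coquelicot Require Import Coquelicot.
Open Scope R_scope.

Fixpoint rsum (g : R -> R) (n : nat) (x t : nat -> R) : R :=
  match n with
  | O => 0
  | S m => rsum g m x t + g (t m) * (x (S m) - x m)
  end.

Definition fine_division (delta : R -> R) (c d : R) (n : nat) (x t : nat -> R) : Prop :=
  x O = c /\ x n = d /\
  forall i : nat, (i < n)%nat ->
    x i <= t i <= x (S i) /\ t i - delta (t i) < x i /\ x (S i) < t i + delta (t i).

(* g is Perron (Henstock–Kurzweil) integrable on [c,d] with integral I *)
Definition is_perron (g : R -> R) (c d I : R) : Prop :=
  c <= d /\
  forall eps : R, 0 < eps ->
    exists delta : R -> R,
      (forall t, c <= t <= d -> 0 < delta t) /\
      forall (n : nat) (x t : nat -> R),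
        fine_division delta c d n x t -> Rabs (rsum g n x t - I) < eps.

Definition perron_integrable (g : R -> R) (c d : R) : Prop :=
  exists I, is_perron g c d I.

Definition perron_int (g : R -> R) (c d : R) : R :=
  epsilon (inhabits 0) (fun I => is_perron g c d I).

Definition perron_near (a b : R) (F : R -> R) (x delta : R) : Prop :=
  0 < delta /\
  (x < b -> x + delta <= b /\ perron_integrable F x (x + delta)) /\
  (a < x -> a <= x - delta /\ perron_integrable F (x - delta) x).

Definition lap_right (F : R -> R) (x delta s : R) : R :=
  s ^ 2 * perron_int (fun t => exp (- (s * t)) * (F (x + t) - F x)) 0 delta.

Definition lap_left (F : R -> R) (x delta s : R) : R :=
  - (s ^ 2) * perron_int (fun t => exp (- (s * t)) * (F (x - t) - F x)) 0 delta.

Definition LD1 (a b : R) (F : R -> R) (x L : R) : Prop :=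
  exists delta : R,
    perron_near a b F x delta /\
    (x < b -> is_lim (lap_right F x delta) p_infty (Finite L)) /\
    (a < x -> is_lim (lap_left F x delta) p_infty (Finite L)).

Definition liminf_pinfty (h : R -> R) : Rbar :=
  Rbar_lub (fun y => exists M : R, y = Glb_Rbar (fun z => exists s, M <= s /\ z = h s)).
Definition limsup_pinfty (h : R -> R) : Rbar :=
  Rbar_glb (fun y => exists M : R, y = Lub_Rbar (fun z => exists s, M <= s /\ z = h s)).

Definition Rbar_maxi (u v : Rbar) : Rbar := Rbar_opp (Rbar_min (Rbar_opp u) (Rbar_opp v)).

Definition LD1_lower (a b : R) (F : R -> R) (x delta : R) : Rbar :=
  if Rlt_dec x b then
    (if Rlt_dec a x then Rbar_min (liminf_pinfty (lap_right F x delta))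
                                  (liminf_pinfty (lap_left F x delta))
     else liminf_pinfty (lap_right F x delta))
  else liminf_pinfty (lap_left F x delta).

Definition LD1_upper (a b : R) (F : R -> R) (x delta : R) : Rbar :=
  if Rlt_dec x b then
    (if Rlt_dec a x then Rbar_maxi (limsup_pinfty (lap_right F x delta))
                                  (limsup_pinfty (lap_left F x delta))
     else limsup_pinfty (lap_right F x delta))
  else limsup_pinfty (lap_left F x delta).

Definition continuous_on_interval (a b : R) (U : R -> R) : Prop :=
  forall x, a <= x <= b ->
    forall eps, 0 < eps -> exists d, 0 < d /\
      forall y, a <= y <= b -> Rabs (y - x) < d -> Rabs (U y - U x) < eps.

Definition major_function (a b : R) (f U : R -> R) : Prop :=
  continuous_on_interval a b U /\
  forall x, a <= x <= b ->
    exists delta, perron_near a b U x delta /\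
      Rbar_le (Finite (f x)) (LD1_lower a b U x delta) /\
      Rbar_lt m_infty (LD1_lower a b U x delta).

Definition minor_function (a b : R) (f V : R -> R) : Prop :=
  continuous_on_interval a b V /\
  forall x, a <= x <= b ->
    exists delta, perron_near a b V x delta /\
      Rbar_le (LD1_upper a b V x delta) (Finite (f x)) /\
      Rbar_lt (LD1_upper a b V x delta) p_infty.

Definition is_laplace (a b : R) (f : R -> R) (I : R) : Prop :=
  Lub_Rbar (fun y => exists V, minor_function a b f V /\ y = V b - V a) = Finite I /\
  Glb_Rbar (fun y => exists U, major_function a b f U /\ y = U b - U a) = Finite I.

Definition laplace_integrable (a b : R) (f : R -> R) : Prop :=
  exists I, is_laplace a b f I.

Definition laplace_int (a b : R) (f : R -> R) : R :=
  epsilon (inhabits 0) (fun I => is_laplace a b f I).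

Fixpoint lensum (lo hi : nat -> R) (n : nat) : R :=
  match n with O => 0 | S m => lensum lo hi m + (hi m - lo m) end.

Definition null_set (N : R -> Prop) : Prop :=
  forall eps, 0 < eps ->
    exists lo hi : nat -> R,
      (forall n, lo n <= hi n) /\
      (forall n, lensum lo hi n <= eps) /\
      (forall x, N x -> exists n, lo n < x < hi n).

From Stdlib Require Import Reals Lra Lia ClassicalEpsilon Classical Cantor Wf_nat.
From Coquelicot Require Import Coquelicot.
Open Scope R_scope.

(* If U is a major and V a minor function of f, then U - V has nonnegative lower Laplace
   derivate and is therefore nondecreasing; hence V(y) - V(x) <= F(y) - F(x) <= U(y) - U(x).
   Choose such pairs (U_k, V_k) with total gap (U_k - V_k)(b) - (U_k - V_k)(a) <= 4^-k.  By
   the rising sun lemma, the nondecreasing function U_k - V_k has a difference quotient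
   larger than 2^-k, to the right or to the left of x, only for x in a set of measure
   O(2^-k).  Off the null set of points lying in infinitely many of these sets, the Laplace
   quotients of F at x differ from those of U_k and V_k by at most 2^-k, and those tend to
   at least, resp. at most, f(x). *)

Lemma continuous_Rmult (f g : R -> R) x :
  continuous f x -> continuous g x -> continuous (fun y => f y * g y) x.
Proof. apply (continuous_mult (K := R_AbsRing)). Qed.

Lemma continuous_Rplus (f g : R -> R) x :
  continuous f x -> continuous g x -> continuous (fun y => f y + g y) x.
Proof. apply (continuous_plus (V := R_NormedModule)). Qed.

Lemma continuous_Rminus (f g : R -> R) x :
  continuous f x -> continuous g x -> continuous (fun y => f y - g y) x.
Proof. apply (continuous_minus (V := R_NormedModule)). Qed.

Lemma continuous_Ropp (f : R -> R) x : continuous f x -> continuous (fun y => - f y) x.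
Proof. apply (continuous_opp (V := R_NormedModule)). Qed.

Ltac solve_continuous :=
  repeat match goal with
  | H : forall z, continuous ?G z |- continuous ?G _ => apply H
  | |- continuous (fun _ => _ * _) _ => apply continuous_Rmult
  | |- continuous (Rmult ?c) _ => apply (continuous_Rmult (fun _ => c) (fun t => t))
  | |- continuous (Rplus ?c) _ => apply (continuous_Rplus (fun _ => c) (fun t => t))
  | |- continuous Ropp _ => apply (continuous_Ropp (fun t => t))
  | |- continuous (fun _ => _ + _) _ => apply continuous_Rplus
  | |- continuous (fun _ => _ - _) _ => apply continuous_Rminus
  | |- continuous (fun _ => - _) _ => apply continuous_Ropp
  | |- continuous (fun _ => exp _) _ => apply continuous_exp_comp
  | |- continuous (fun t => t) _ => apply continuous_id
  | |- continuous (fun _ => ?c) _ => apply continuous_const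
  | H : forall z, continuous ?G z |- continuous (fun t => ?G (@?u t)) _ =>
      apply (continuous_comp u G); [|apply H]
  end.

Lemma ex_RInt_continuous_everywhere (h : R -> R) u v :
  (forall z, continuous h z) -> ex_RInt h u v.
Proof. intros Hh; apply (ex_RInt_continuous (V := R_CompleteNormedModule)); auto. Qed.

Lemma continuous_ball (h : R -> R) t e : continuous h t -> 0 < e ->
  exists r, 0 < r /\ forall u, Rabs (u - t) < r -> Rabs (h u - h t) < e.
Proof.
  intros Ht He. destruct (proj2 (continuity_pt_filterlim h t) Ht e He) as [r [Hr Hball]].
  exists r; split; auto. intros u Hu.
  destruct (Req_dec u t) as [->|Hne]; [rewrite Rminus_eq_0, Rabs_R0; lra|].
  apply Hball. split; [split; [exact I|auto]|exact Hu].
Qed.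

Lemma continuous_argmax (h : R -> R) u v : (forall z, continuous h z) -> u <= v ->
  exists m, u <= m <= v /\ forall t, u <= t <= v -> h t <= h m.
Proof.
  intros Hh Huv. destruct (continuity_ab_maj h u v Huv) as [m [Hmax Hm]].
  - intros z _. apply continuity_pt_filterlim, Hh.
  - exists m; auto.
Qed.

Definition clamp (a b x : R) : R := Rmax a (Rmin b x).

Lemma clamp_id a b x : a <= x <= b -> clamp a b x = x.
Proof. intros; unfold clamp, Rmax, Rmin; repeat destruct Rle_dec; lra. Qed.

Lemma clamp_in a b x : a <= b -> a <= clamp a b x <= b.
Proof. intros; unfold clamp, Rmax, Rmin; repeat destruct Rle_dec; lra. Qed.

Lemma clamp_dist a b x y : a <= b -> Rabs (clamp a b x - clamp a b y) <= Rabs (x - y).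
Proof.
  intros; unfold clamp, Rmax, Rmin; repeat destruct Rle_dec;
  unfold Rabs; repeat destruct Rcase_abs; lra.
Qed.

Definition extend (a b : R) (U : R -> R) : R -> R := fun y => U (clamp a b y).

Definition reflect (G : R -> R) : R -> R := fun y => - G (- y).

Lemma extend_id a b U y : a <= y <= b -> extend a b U y = U y.
Proof. intros Hy; unfold extend; rewrite clamp_id; auto. Qed.

Lemma continuous_extend a b U : a <= b -> continuous_on_interval a b U ->
  forall z, continuous (extend a b U) z.
Proof.
  intros Hab HU z. apply continuity_pt_filterlim. intros eps Heps.
  destruct (HU _ (clamp_in a b z Hab) eps Heps) as [r [Hr Hclose]].
  exists r; split; auto. intros y [_ Hy]. apply Hclose; [apply clamp_in; auto|].
  eapply Rle_lt_trans; [apply clamp_dist; auto|exact Hy].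
Qed.

Lemma continuous_reflect G : (forall z, continuous G z) -> forall z, continuous (reflect G) z.
Proof. intros HG z; unfold reflect; solve_continuous. Qed.

Lemma continuous_on_interval_sub a b c d U : a <= c -> d <= b ->
  continuous_on_interval a b U -> continuous_on_interval c d U.
Proof.
  intros Hac Hdb HU x Hx eps Heps. destruct (HU x ltac:(lra) eps Heps) as [r [Hr Hclose]].
  exists r; split; auto. intros y Hy; apply Hclose; lra.
Qed.

(** * The Perron integral of a continuous function *)

Lemma fine_division_bounds delta c d n x t : fine_division delta c d n x t ->
  forall i, (i < n)%nat -> c <= x i <= t i /\ t i <= x (S i) <= d.
Proof.
  intros [Hx0 [Hxn Hstep]].
  assert (Hlow : forall i, (i <= n)%nat -> c <= x i).
  { induction i as [|i IH]; intros Hi; [lra|].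
    specialize (IH ltac:(lia)). destruct (Hstep i ltac:(lia)) as [? _]. lra. }
  assert (Hhigh : forall k, (k <= n)%nat -> x (n - k)%nat <= d).
  { induction k as [|k IH]; intros Hk; [rewrite Nat.sub_0_r; lra|].
    specialize (IH ltac:(lia)). destruct (Hstep (n - S k)%nat ltac:(lia)) as [? _].
    replace (S (n - S k)) with (n - k)%nat in * by lia. lra. }
  intros i Hi. specialize (Hlow i ltac:(lia)). specialize (Hhigh (n - S i)%nat ltac:(lia)).
  replace (n - (n - S i))%nat with (S i) in Hhigh by lia.
  destruct (Hstep i Hi) as [? _]. lra.
Qed.

Lemma fine_division_weaken d1 d2 c d n x t : (forall u, c <= u <= d -> d1 u <= d2 u) ->
  fine_division d1 c d n x t -> fine_division d2 c d n x t.
Proof.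
  intros Hle Hf. pose proof (fine_division_bounds _ _ _ _ _ _ Hf) as Hb.
  destruct Hf as [Hx0 [Hxn Hstep]]. split; [auto|split; [auto|]].
  intros i Hi. specialize (Hb i Hi). specialize (Hle (t i) ltac:(lra)).
  destruct (Hstep i Hi). lra.
Qed.

(* A fine division of [c, z] extends to one of [c, min d (m + delta m / 2)] by one more
   interval tagged at the supremum m of the attainable z. *)
Lemma cousin delta c d : c <= d -> (forall u, c <= u <= d -> 0 < delta u) ->
  exists n x t, fine_division delta c d n x t.
Proof.
  intros Hcd Hpos.
  set (Reach := fun z => c <= z <= d /\ exists n x t, fine_division delta c z n x t).
  assert (Hc : Reach c).
  { split; [lra|]. exists O, (fun _ => c), (fun _ => c).
    split; [auto|split; [auto|]]. intros i Hi; lia. }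
  assert (Hbound : bound Reach) by (exists d; intros z [Hz _]; lra).
  destruct (completeness Reach Hbound (ex_intro _ c Hc)) as [m [Hub Hlub]].
  assert (Hcm : c <= m) by (apply Hub; auto).
  assert (Hmd : m <= d) by (apply Hlub; intros z [Hz _]; lra).
  assert (Hdm : 0 < delta m) by (apply Hpos; lra).
  assert (Hnear : exists z, Reach z /\ m - delta m < z).
  { apply NNPP; intro Hno. assert (m <= m - delta m); [|lra].
    apply Hlub. intros z Hz. apply Rnot_lt_le; intro. apply Hno; eauto. }
  destruct Hnear as [z [[Hz [n [x [t [Hx0 [Hxn Hstep]]]]]] Hzm]].
  assert (Hzm' : z <= m) by (apply Hub; split; [auto|exists n, x, t; split; auto]).
  set (z' := Rmin d (m + delta m / 2)).
  assert (Hext : fine_division delta c z' (S n)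
     (fun i => if Nat.leb i n then x i else z') (fun i => if Nat.ltb i n then t i else m)).
  { split; [simpl; auto|split].
    - replace (Nat.leb (S n) n) with false by (symmetry; apply Nat.leb_gt; lia); auto.
    - intros i Hi. destruct (Nat.eq_dec i n) as [->|Hne].
      + rewrite Nat.leb_refl, Nat.ltb_irrefl.
        replace (Nat.leb (S n) n) with false by (symmetry; apply Nat.leb_gt; lia).
        unfold z', Rmin; destruct Rle_dec; lra.
      + replace (Nat.leb i n) with true by (symmetry; apply Nat.leb_le; lia).
        replace (Nat.leb (S i) n) with true by (symmetry; apply Nat.leb_le; lia).
        replace (Nat.ltb i n) with true by (symmetry; apply Nat.ltb_lt; lia).
        apply Hstep; lia. }
  assert (Hz' : Reach z') by (split; [unfold z', Rmin; destruct Rle_dec; lra|eauto]).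
  assert (z' <= m) by (apply Hub; auto).
  replace d with z' by (unfold z', Rmin in *; destruct Rle_dec; lra). eauto.
Qed.

Lemma is_perron_unique g c d I1 I2 : is_perron g c d I1 -> is_perron g c d I2 -> I1 = I2.
Proof.
  intros [Hcd H1] [_ H2]. apply NNPP; intro Hne.
  set (e := Rabs (I1 - I2) / 2).
  assert (He : 0 < e) by (apply Rdiv_lt_0_compat; [apply Rabs_pos_lt; lra|lra]).
  destruct (H1 e He) as [d1 [Hd1 Hsum1]]. destruct (H2 e He) as [d2 [Hd2 Hsum2]].
  destruct (cousin (fun u => Rmin (d1 u) (d2 u)) c d Hcd) as [n [x [t Hf]]].
  { intros u Hu. apply Rmin_glb_lt; auto. }
  specialize (Hsum1 n x t (fine_division_weaken _ _ _ _ _ _ _ (fun u _ => Rmin_l _ _) Hf)).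
  specialize (Hsum2 n x t (fine_division_weaken _ _ _ _ _ _ _ (fun u _ => Rmin_r _ _) Hf)).
  assert (Rabs (I1 - I2) <= Rabs (rsum g n x t - I1) + Rabs (rsum g n x t - I2)).
  { replace (I1 - I2) with (- (rsum g n x t - I1) + (rsum g n x t - I2)) by ring.
    rewrite <- (Rabs_Ropp (rsum g n x t - I1)). apply Rabs_triang. }
  unfold e in *; lra.
Qed.

(* Each Riemann sum is within e (x_i+1 - x_i) of the integral on every piece, once
   delta is a modulus of continuity of h for e. *)
Lemma is_perron_RInt (g h : R -> R) c d : c <= d -> (forall z, continuous h z) ->
  (forall u, c <= u <= d -> g u = h u) -> is_perron g c d (RInt h c d).
Proof.
  intros Hcd Hh Hgh. split; auto. intros eps Heps.
  set (e := eps / (d - c + 1)).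
  assert (He : 0 < e) by (apply Rdiv_lt_0_compat; lra).
  destruct (choice (fun u r => 0 < r /\ forall v, Rabs (v - u) < r -> Rabs (h v - h u) < e))
    as [delta Hdelta].
  { intros u. apply continuous_ball; auto. }
  exists delta. split; [intros; apply Hdelta|]. intros n x t Hf.
  assert (Hex : forall u v, ex_RInt h u v) by (intros; apply ex_RInt_continuous_everywhere; auto).
  assert (Hpartial : forall i, (i <= n)%nat ->
            Rabs (rsum g i x t - RInt h (x O) (x i)) <= e * (x i - x O)).
  { induction i as [|i IH]; intros Hi.
    { simpl. rewrite RInt_point, Rminus_0_r, Rabs_R0. unfold zero; simpl; lra. }
    specialize (IH ltac:(lia)). simpl.
    destruct (fine_division_bounds _ _ _ _ _ _ Hf i ltac:(lia)) as [Ht1 Ht2].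
    destruct Hf as [_ [_ Hstep]]. destruct (Hstep i ltac:(lia)) as [_ [Hl Hr]].
    rewrite <- (RInt_Chasles h (x O) (x i) (x (S i))) by auto. unfold plus; simpl.
    assert (Hpiece : Rabs (g (t i) * (x (S i) - x i) - RInt h (x i) (x (S i)))
                     <= e * (x (S i) - x i)).
    { rewrite Hgh by lra.
      replace (h (t i) * (x (S i) - x i) - RInt h (x i) (x (S i)))
        with (RInt (fun v => h (t i) - h v) (x i) (x (S i))).
      2: { rewrite (RInt_minus (fun _ => h (t i)) h) by (auto; apply ex_RInt_const).
           rewrite RInt_const. unfold minus, plus, opp, scal; simpl; unfold mult; simpl. ring. }
      rewrite Rmult_comm. apply abs_RInt_le_const; [lra| |].
      - apply (ex_RInt_minus (fun _ => h (t i)) h); auto; apply ex_RInt_const.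
      - intros v Hv. rewrite Rabs_minus_sym. left. apply Hdelta.
        unfold Rabs; destruct Rcase_abs; lra. }
    replace (rsum g i x t + g (t i) * (x (S i) - x i) -
             (RInt h (x O) (x i) + RInt h (x i) (x (S i))))
      with ((rsum g i x t - RInt h (x O) (x i)) +
            (g (t i) * (x (S i) - x i) - RInt h (x i) (x (S i)))) by ring.
    eapply Rle_trans; [apply Rabs_triang|]. lra. }
  specialize (Hpartial n (le_n n)). destruct Hf as [Hx0 [Hxn _]]. rewrite Hx0, Hxn in Hpartial.
  eapply Rle_lt_trans; [exact Hpartial|].
  apply Rlt_le_trans with (e * (d - c + 1)); [apply Rmult_lt_compat_l; lra|].
  unfold e; right; field; lra.
Qed.

Lemma perron_int_RInt (g h : R -> R) c d : c <= d -> (forall z, continuous h z) ->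
  (forall u, c <= u <= d -> g u = h u) -> perron_int g c d = RInt h c d.
Proof.
  intros Hcd Hh Hgh. pose proof (is_perron_RInt g h c d Hcd Hh Hgh) as HP.
  apply (is_perron_unique g c d); auto. unfold perron_int. apply epsilon_spec; eauto.
Qed.

Lemma perron_integrable_continuous (g h : R -> R) c d : c <= d -> (forall z, continuous h z) ->
  (forall u, c <= u <= d -> g u = h u) -> perron_integrable g c d.
Proof. intros; eexists; apply is_perron_RInt; eauto. Qed.

(** * Laplace quotients of continuous functions *)

Definition laplace_quotient (G : R -> R) (x d s : R) : R :=
  s ^ 2 * RInt (fun t => exp (- (s * t)) * (G (x + t) - G x)) 0 d.

Lemma lap_right_extend a b U x d s : a <= b -> continuous_on_interval a b U ->
  a <= x -> 0 <= d -> x + d <= b ->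
  lap_right U x d s = laplace_quotient (extend a b U) x d s.
Proof.
  intros Hab HU Hx Hd Hxd. pose proof (continuous_extend a b U Hab HU) as HE.
  unfold lap_right, laplace_quotient. f_equal.
  apply perron_int_RInt; auto; [intros z; solve_continuous|].
  intros u Hu. rewrite !extend_id by lra. auto.
Qed.

Lemma lap_left_reflect a b U x d s : a <= b -> continuous_on_interval a b U ->
  a <= x - d -> 0 <= d -> x <= b ->
  lap_left U x d s = laplace_quotient (reflect (extend a b U)) (- x) d s.
Proof.
  intros Hab HU Hx Hd Hxb. pose proof (continuous_extend a b U Hab HU) as HE.
  set (k := fun t => exp (- (s * t)) * (reflect (extend a b U) (- x + t) - reflect (extend a b U) (- x))).
  assert (Hk : forall z, continuous k z) by (intros z; unfold k, reflect; solve_continuous).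
  unfold lap_left, laplace_quotient. fold k.
  rewrite (perron_int_RInt _ (fun t => - k t) 0 d Hd); [|intros z; solve_continuous|].
  - rewrite (RInt_opp (V := R_CompleteNormedModule) k) by (apply ex_RInt_continuous_everywhere; auto).
    unfold opp; simpl. ring.
  - intros u Hu. unfold k, reflect. replace (- (- x + u)) with (x - u) by ring.
    rewrite Ropp_involutive, !extend_id by lra. ring.
Qed.

Lemma ex_RInt_laplace_kernel (G : R -> R) x s u v : (forall z, continuous G z) ->
  ex_RInt (fun t => exp (- (s * t)) * (G (x + t) - G x)) u v.
Proof. intros HG. apply ex_RInt_continuous_everywhere. intros z; solve_continuous. Qed.

Lemma laplace_quotient_minus (G1 G2 : R -> R) x d s :
  (forall z, continuous G1 z) -> (forall z, continuous G2 z) ->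
  laplace_quotient (fun y => G1 y - G2 y) x d s = laplace_quotient G1 x d s - laplace_quotient G2 x d s.
Proof.
  intros H1 H2. unfold laplace_quotient. rewrite <- Rmult_minus_distr_l. f_equal.
  rewrite <- (RInt_minus (V := R_CompleteNormedModule)) by (apply ex_RInt_laplace_kernel; auto).
  apply RInt_ext. intros t _. unfold minus, plus, opp; simpl. ring.
Qed.

Lemma laplace_quotient_le (G1 G2 : R -> R) x d s :
  (forall z, continuous G1 z) -> (forall z, continuous G2 z) -> 0 <= d ->
  (forall t, 0 <= t <= d -> G1 (x + t) - G1 x <= G2 (x + t) - G2 x) ->
  laplace_quotient G1 x d s <= laplace_quotient G2 x d s.
Proof.
  intros H1 H2 Hd Hle. unfold laplace_quotient.
  apply Rmult_le_compat_l; [apply pow2_ge_0|].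
  apply RInt_le; auto; try apply ex_RInt_laplace_kernel; auto.
  intros t Ht. apply Rmult_le_compat_l; [left; apply exp_pos|]. apply Hle; lra.
Qed.

Lemma laplace_quotient_const c x d s : laplace_quotient (fun _ => c) x d s = 0.
Proof.
  unfold laplace_quotient.
  rewrite (RInt_ext _ (fun _ => 0)); [|intros t _; rewrite Rminus_eq_0; apply Rmult_0_r].
  rewrite RInt_const. unfold scal; simpl; unfold mult; simpl. ring.
Qed.

Definition laplace_mass (s d : R) : R := 1 - exp (- (s * d)) * (1 + s * d).

Lemma laplace_quotient_linear c x d s : 0 < s ->
  laplace_quotient (fun y => c * y) x d s = c * laplace_mass s d.
Proof.
  intros Hs. unfold laplace_quotient, laplace_mass.
  set (P := fun t => - (c * exp (- (s * t)) * (1 + s * t)) / s ^ 2).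
  assert (HP : is_RInt (fun t => exp (- (s * t)) * (c * (x + t) - c * x)) 0 d (minus (P d) (P 0))).
  { apply (is_RInt_derive (V := R_CompleteNormedModule) P).
    - intros y _. unfold P. auto_derive; auto. field. lra.
    - intros y _. solve_continuous. }
  rewrite (is_RInt_unique _ _ _ _ HP). unfold minus, plus, opp, P; simpl.
  rewrite Rmult_0_r, Ropp_0, exp_0. field. lra.
Qed.

Lemma laplace_mass_bounds s d : 0 < s -> 0 <= d -> 0 <= laplace_mass s d <= 1.
Proof.
  intros Hs Hd. unfold laplace_mass.
  assert (0 <= s * d) by (apply Rmult_le_pos; lra).
  assert (Hexp : 1 + s * d <= exp (s * d)).
  { destruct (Req_dec (s * d) 0) as [->|]; [rewrite exp_0; lra|left; apply exp_ineq1; lra]. }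
  rewrite exp_Ropp. pose proof (exp_pos (s * d)).
  assert (0 <= / exp (s * d) * (1 + s * d) <= 1); [|lra].
  split; [apply Rmult_le_pos; [left; apply Rinv_0_lt_compat|]; lra|].
  apply Rmult_le_reg_l with (exp (s * d)); auto. rewrite <- Rmult_assoc, Rinv_r; lra.
Qed.

Lemma exp_ge_cube u : 0 <= u -> u ^ 3 / 27 <= exp u.
Proof.
  intros Hu. replace u with (u / 3 + u / 3 + u / 3) at 2 by field. rewrite !exp_plus.
  assert (1 + u / 3 <= exp (u / 3)).
  { destruct (Req_dec u 0) as [->|]; [unfold Rdiv; rewrite Rmult_0_l, exp_0; lra|].
    left; apply exp_ineq1; lra. }
  replace (u ^ 3 / 27) with (u / 3 * (u / 3) * (u / 3)) by field.
  repeat apply Rmult_le_compat; try apply Rmult_le_pos; lra.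
Qed.

Lemma laplace_mass_large d : 0 < d -> Rbar_locally p_infty (fun s => 1 / 2 <= laplace_mass s d).
Proof.
  intros Hd. exists (10 / d). intros s Hs.
  assert (Hsd : 10 <= s * d).
  { apply Rmult_le_reg_r with (/ d); [apply Rinv_0_lt_compat; lra|].
    replace (s * d * / d) with s by (field; lra). unfold Rdiv in Hs; lra. }
  unfold laplace_mass. rewrite exp_Ropp.
  pose proof (exp_ge_cube (s * d) ltac:(lra)). pose proof (exp_pos (s * d)).
  assert (2 * (1 + s * d) <= exp (s * d)).
  { set (u := s * d) in *. assert (u ^ 3 = u * (u * u)) by ring. nra. }
  assert (/ exp (s * d) * (1 + s * d) <= 1 / 2); [|lra].
  apply Rmult_le_reg_l with (exp (s * d)); auto. rewrite <- Rmult_assoc, Rinv_r; lra.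
Qed.

Lemma laplace_quotient_bounds (G : R -> R) x d s eta :
  (forall z, continuous G z) -> 0 <= d -> 0 < s -> 0 <= eta ->
  (forall t, 0 <= t <= d -> 0 <= G (x + t) - G x <= eta * t) ->
  0 <= laplace_quotient G x d s <= eta.
Proof.
  intros HG Hd Hs Heta Hinc. split.
  - rewrite <- (laplace_quotient_const 0 x d s).
    apply laplace_quotient_le; auto; [intros; apply continuous_const|].
    intros t Ht; specialize (Hinc t Ht); lra.
  - apply Rle_trans with (laplace_quotient (fun y => eta * y) x d s).
    + apply laplace_quotient_le; auto; [intros z; solve_continuous|].
      intros t Ht; specialize (Hinc t Ht); lra.
    + rewrite laplace_quotient_linear by auto.
      pose proof (laplace_mass_bounds s d Hs Hd). nra.
Qed.

Lemma sq_exp_decay s d : 0 < s -> 0 < d -> s ^ 2 * exp (- (s * d)) <= 27 / (d ^ 3 * s).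
Proof.
  intros Hs Hd. rewrite exp_Ropp.
  pose proof (exp_ge_cube (s * d) ltac:(nra)). pose proof (exp_pos (s * d)).
  assert (0 < d ^ 3) by (apply pow_lt; lra).
  apply Rmult_le_reg_r with (exp (s * d)); auto.
  rewrite Rmult_assoc, Rinv_l, Rmult_1_r by lra.
  apply Rle_trans with (27 / (d ^ 3 * s) * ((s * d) ^ 3 / 27)); [right; field; lra|].
  apply Rmult_le_compat_l; [|auto]. apply Rdiv_le_0_compat; [lra|]. apply Rmult_lt_0_compat; lra.
Qed.

Lemma laplace_quotient_radius_le (G : R -> R) x d1 d2 : (forall z, continuous G z) ->
  0 < d1 -> d1 <= d2 -> forall eps, 0 < eps ->
  Rbar_locally p_infty (fun s => Rabs (laplace_quotient G x d1 s - laplace_quotient G x d2 s) < eps).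
Proof.
  intros HG Hd1 Hle eps Heps.
  set (k := fun s t => exp (- (s * t)) * (G (x + t) - G x)).
  destruct (continuity_ab_maj (fun t => Rabs (G (x + t) - G x)) d1 d2 Hle) as [m [Hm _]].
  { intros z _. apply continuity_pt_filterlim.
    apply (continuous_comp (fun t => G (x + t) - G x) Rabs); [solve_continuous|].
    apply continuous_Rabs. }
  set (B := Rabs (G (x + m) - G x)). assert (HB : 0 <= B) by apply Rabs_pos.
  set (C := 27 * (d2 - d1) * B / d1 ^ 3).
  assert (HC : 0 <= C) by (unfold C; apply Rdiv_le_0_compat; [|apply pow_lt]; nra).
  exists (C / eps + 1). intros s Hs.
  assert (Hs0 : 0 < s) by (assert (0 <= C / eps) by (apply Rdiv_le_0_compat; lra); lra).
  unfold laplace_quotient. fold (k s).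
  rewrite <- (RInt_Chasles (V := R_CompleteNormedModule) (k s) 0 d1 d2)
    by (apply ex_RInt_laplace_kernel; auto).
  change (plus (RInt (k s) 0 d1) (RInt (k s) d1 d2)) with (RInt (k s) 0 d1 + RInt (k s) d1 d2).
  replace (s ^ 2 * RInt (k s) 0 d1 - s ^ 2 * (RInt (k s) 0 d1 + RInt (k s) d1 d2))
    with (- (s ^ 2 * RInt (k s) d1 d2)) by ring.
  rewrite Rabs_Ropp, Rabs_mult, (Rabs_pos_eq (s ^ 2)) by apply pow2_ge_0.
  assert (Htail : Rabs (RInt (k s) d1 d2) <= (d2 - d1) * (exp (- (s * d1)) * B)).
  { apply abs_RInt_le_const; auto; [apply ex_RInt_laplace_kernel; auto|].
    intros t Ht. unfold k. rewrite Rabs_mult, Rabs_pos_eq by (left; apply exp_pos).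
    apply Rmult_le_compat; [left; apply exp_pos|apply Rabs_pos| |apply Hm; lra].
    destruct (Req_dec t d1) as [->|]; [lra|]. left; apply exp_increasing; nra. }
  pose proof (sq_exp_decay s d1 Hs0 Hd1) as Hdecay.
  assert (Hsmall : C / s < eps).
  { apply Rmult_lt_reg_r with s; auto. unfold Rdiv. rewrite Rmult_assoc, Rinv_l, Rmult_1_r by lra.
    assert (C / eps * eps = C) by (field; lra). nra. }
  apply Rle_lt_trans with ((d2 - d1) * B * (s ^ 2 * exp (- (s * d1)))).
  { replace ((d2 - d1) * B * (s ^ 2 * exp (- (s * d1))))
      with (s ^ 2 * ((d2 - d1) * (exp (- (s * d1)) * B))) by ring.
    apply Rmult_le_compat_l; [apply pow2_ge_0|auto]. }
  apply Rle_lt_trans with (C / s); [|auto].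
  apply Rle_trans with ((d2 - d1) * B * (27 / (d1 ^ 3 * s))); [apply Rmult_le_compat_l; nra|].
  right; unfold C; field; split; lra.
Qed.

Lemma laplace_quotient_radius (G : R -> R) x d1 d2 : (forall z, continuous G z) ->
  0 < d1 -> 0 < d2 -> forall eps, 0 < eps ->
  Rbar_locally p_infty (fun s => Rabs (laplace_quotient G x d1 s - laplace_quotient G x d2 s) < eps).
Proof.
  intros HG Hd1 Hd2 eps Heps. destruct (Rle_dec d1 d2).
  - apply laplace_quotient_radius_le; auto.
  - eapply filter_imp; [|apply (laplace_quotient_radius_le G x d2 d1 HG Hd2 ltac:(lra) eps Heps)].
    intros s; rewrite Rabs_minus_sym; auto.
Qed.

Definition eventually_above (h : R -> R) (c : R) : Prop :=
  forall eps, 0 < eps -> Rbar_locally p_infty (fun s => c - eps < h s).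

Definition eventually_below (h : R -> R) (c : R) : Prop :=
  forall eps, 0 < eps -> Rbar_locally p_infty (fun s => h s < c + eps).

Lemma Rbar_le_of_le_sub (c : R) (l : Rbar) :
  (forall eps, 0 < eps -> Rbar_le (Finite (c - eps)) l) -> Rbar_le (Finite c) l.
Proof.
  intros H. destruct l as [l| |]; simpl in *; auto; [|apply (H 1); lra].
  apply Rnot_lt_le; intro. specialize (H ((c - l) / 2) ltac:(lra)). lra.
Qed.

Lemma Rbar_le_of_le_add (c : R) (l : Rbar) :
  (forall eps, 0 < eps -> Rbar_le l (Finite (c + eps))) -> Rbar_le l (Finite c).
Proof.
  intros H. destruct l as [l| |]; simpl in *; auto; [|apply (H 1); lra].
  apply Rnot_lt_le; intro. specialize (H ((l - c) / 2) ltac:(lra)). lra.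
Qed.

Lemma liminf_ge_iff h c : Rbar_le (Finite c) (liminf_pinfty h) <-> eventually_above h c.
Proof.
  unfold liminf_pinfty, Rbar_lub. destruct (Rbar_ex_lub _) as [l [Hub Hlub]]; simpl.
  split.
  - intros Hc eps Heps. apply NNPP; intro Hnot.
    assert (Rbar_le l (Finite (c - eps))); [|destruct l; simpl in *; try contradiction; lra].
    apply Hlub. intros y [M ->].
    destruct (not_all_ex_not _ _ (not_ex_all_not _ _ Hnot M)) as [s Hs].
    apply imply_to_and in Hs. destruct Hs as [HMs Hs].
    eapply Rbar_le_trans;
      [apply (proj1 (Glb_Rbar_correct (fun z => exists s, M <= s /\ z = h s)));
       exists s; split; [lra|reflexivity]|].
    simpl; lra.
  - intros Hev. apply Rbar_le_of_le_sub. intros eps Heps. destruct (Hev eps Heps) as [M HM].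
    eapply Rbar_le_trans; [|apply Hub; exists (M + 1); reflexivity].
    apply (proj2 (Glb_Rbar_correct (fun z => exists s, M + 1 <= s /\ z = h s))).
    intros z [s [Hs ->]]. simpl. left; apply HM; lra.
Qed.

Lemma limsup_le_iff h c : Rbar_le (limsup_pinfty h) (Finite c) <-> eventually_below h c.
Proof.
  unfold limsup_pinfty, Rbar_glb. destruct (Rbar_ex_glb _) as [l [Hlb Hglb]]; simpl.
  split.
  - intros Hc eps Heps. apply NNPP; intro Hnot.
    assert (Rbar_le (Finite (c + eps)) l); [|destruct l; simpl in *; try contradiction; lra].
    apply Hglb. intros y [M ->].
    destruct (not_all_ex_not _ _ (not_ex_all_not _ _ Hnot M)) as [s Hs].
    apply imply_to_and in Hs. destruct Hs as [HMs Hs].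
    eapply Rbar_le_trans;
      [|apply (proj1 (Lub_Rbar_correct (fun z => exists s, M <= s /\ z = h s)));
        exists s; split; [lra|reflexivity]].
    simpl; lra.
  - intros Hev. apply Rbar_le_of_le_add. intros eps Heps. destruct (Hev eps Heps) as [M HM].
    eapply Rbar_le_trans; [apply Hlb; exists (M + 1); reflexivity|].
    apply (proj2 (Lub_Rbar_correct (fun z => exists s, M + 1 <= s /\ z = h s))).
    intros z [s [Hs ->]]. simpl. left; apply HM; lra.
Qed.

Lemma LD1_lower_ge_iff a b U x d c : a < b -> a <= x <= b ->
  Rbar_le (Finite c) (LD1_lower a b U x d) <->
  (x < b -> eventually_above (lap_right U x d) c) /\ (a < x -> eventually_above (lap_left U x d) c).
Proof.
  intros Hab Hx. unfold LD1_lower.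
  destruct (Rlt_dec x b); destruct (Rlt_dec a x); try lra; rewrite ?liminf_ge_iff.
  - destruct (liminf_pinfty (lap_right U x d)) as [r1| |] eqn:E1;
    destruct (liminf_pinfty (lap_left U x d)) as [r2| |] eqn:E2;
    rewrite <- !liminf_ge_iff, E1, E2; simpl; unfold Rmin; try destruct Rle_dec; intuition lra.
  - intuition.
  - intuition.
Qed.

Lemma LD1_upper_le_iff a b U x d c : a < b -> a <= x <= b ->
  Rbar_le (LD1_upper a b U x d) (Finite c) <->
  (x < b -> eventually_below (lap_right U x d) c) /\ (a < x -> eventually_below (lap_left U x d) c).
Proof.
  intros Hab Hx. unfold LD1_upper, Rbar_maxi.
  destruct (Rlt_dec x b); destruct (Rlt_dec a x); try lra; rewrite ?limsup_le_iff.
  - destruct (limsup_pinfty (lap_right U x d)) as [r1| |] eqn:E1;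
    destruct (limsup_pinfty (lap_left U x d)) as [r2| |] eqn:E2;
    rewrite <- !limsup_le_iff, E1, E2; simpl; unfold Rmin; try destruct Rle_dec; intuition lra.
  - intuition.
  - intuition.
Qed.

Lemma eventually_above_ext h1 h2 c : (forall s, h1 s = h2 s) ->
  eventually_above h1 c -> eventually_above h2 c.
Proof.
  intros Heq H eps Heps. eapply filter_imp; [|apply (H eps Heps)]. intros s; rewrite <- Heq; auto.
Qed.

Lemma eventually_below_ext h1 h2 c : (forall s, h1 s = h2 s) ->
  eventually_below h1 c -> eventually_below h2 c.
Proof.
  intros Heq H eps Heps. eapply filter_imp; [|apply (H eps Heps)]. intros s; rewrite <- Heq; auto.
Qed.

Lemma eventually_above_transfer h1 h2 c : eventually_above h1 c ->
  (forall eps, 0 < eps -> Rbar_locally p_infty (fun s => Rabs (h1 s - h2 s) < eps)) ->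
  eventually_above h2 c.
Proof.
  intros H1 Hclose eps Heps.
  eapply filter_imp; [|apply filter_and; [apply (H1 (eps / 2))|apply (Hclose (eps / 2))]; lra].
  intros s [Hs1 Hs2]. unfold Rabs in Hs2; destruct Rcase_abs in Hs2; lra.
Qed.

Lemma eventually_below_transfer h1 h2 c : eventually_below h1 c ->
  (forall eps, 0 < eps -> Rbar_locally p_infty (fun s => Rabs (h1 s - h2 s) < eps)) ->
  eventually_below h2 c.
Proof.
  intros H1 Hclose eps Heps.
  eapply filter_imp; [|apply filter_and; [apply (H1 (eps / 2))|apply (Hclose (eps / 2))]; lra].
  intros s [Hs1 Hs2]. unfold Rabs in Hs2; destruct Rcase_abs in Hs2; lra.
Qed.

Lemma interval_radius a b z : a < b -> a <= z <= b ->
  exists d, 0 < d /\ (z < b -> z + d <= b) /\ (a < z -> a <= z - d).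
Proof.
  intros Hab Hz.
  exists (Rmin (if Rlt_dec z b then b - z else b - a) (if Rlt_dec a z then z - a else b - a)).
  pose proof (Rmin_l (if Rlt_dec z b then b - z else b - a) (if Rlt_dec a z then z - a else b - a)).
  pose proof (Rmin_r (if Rlt_dec z b then b - z else b - a) (if Rlt_dec a z then z - a else b - a)).
  split; [apply Rmin_glb_lt|]; destruct (Rlt_dec z b), (Rlt_dec a z); lra.
Qed.

Lemma perron_near_continuous a b U z d : continuous_on_interval a b U -> a <= z <= b ->
  0 < d -> (z < b -> z + d <= b) -> (a < z -> a <= z - d) -> perron_near a b U z d.
Proof.
  intros HU Hz Hd Hr Hl. assert (Hab : a <= b) by lra.
  pose proof (continuous_extend a b U Hab HU) as HE.
  split; [auto|split].
  - intros Hzb. specialize (Hr Hzb). split; auto.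
    apply (perron_integrable_continuous _ (extend a b U)); auto; [lra|].
    intros u Hu; rewrite extend_id; auto; lra.
  - intros Haz. specialize (Hl Haz). split; auto.
    apply (perron_integrable_continuous _ (extend a b U)); auto; [lra|].
    intros u Hu; rewrite extend_id; auto; lra.
Qed.

Lemma major_function_eventually a b f U x : a < b -> major_function a b f U -> a <= x <= b ->
  (x < b -> forall d, 0 < d -> x + d <= b ->
     eventually_above (laplace_quotient (extend a b U) x d) (f x)) /\
  (a < x -> forall d, 0 < d -> a <= x - d ->
     eventually_above (laplace_quotient (reflect (extend a b U)) (- x) d) (f x)).
Proof.
  intros Hab [HU HM] Hx. pose proof (continuous_extend a b U ltac:(lra) HU) as HE.
  destruct (HM x Hx) as [dl [[Hdl [Hr Hl]] [Hle _]]].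
  apply LD1_lower_ge_iff in Hle; auto. destruct Hle as [Hle_r Hle_l].
  split; intros Hside d Hd Hxd.
  - destruct (Hr Hside) as [Hxdl _].
    apply eventually_above_transfer with (laplace_quotient (extend a b U) x dl).
    + apply (eventually_above_ext (lap_right U x dl)); auto.
      intros s; apply lap_right_extend; auto; lra.
    + apply laplace_quotient_radius; auto.
  - destruct (Hl Hside) as [Hxdl _].
    apply eventually_above_transfer with (laplace_quotient (reflect (extend a b U)) (- x) dl).
    + apply (eventually_above_ext (lap_left U x dl)); auto.
      intros s; apply lap_left_reflect; auto; lra.
    + apply laplace_quotient_radius; auto. apply continuous_reflect; auto.
Qed.

Lemma minor_function_eventually a b f V x : a < b -> minor_function a b f V -> a <= x <= b ->
  (x < b -> forall d, 0 < d -> x + d <= b ->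
     eventually_below (laplace_quotient (extend a b V) x d) (f x)) /\
  (a < x -> forall d, 0 < d -> a <= x - d ->
     eventually_below (laplace_quotient (reflect (extend a b V)) (- x) d) (f x)).
Proof.
  intros Hab [HV HM] Hx. pose proof (continuous_extend a b V ltac:(lra) HV) as HE.
  destruct (HM x Hx) as [dl [[Hdl [Hr Hl]] [Hle _]]].
  apply LD1_upper_le_iff in Hle; auto. destruct Hle as [Hle_r Hle_l].
  split; intros Hside d Hd Hxd.
  - destruct (Hr Hside) as [Hxdl _].
    apply eventually_below_transfer with (laplace_quotient (extend a b V) x dl).
    + apply (eventually_below_ext (lap_right V x dl)); auto.
      intros s; apply lap_right_extend; auto; lra.
    + apply laplace_quotient_radius; auto.
  - destruct (Hl Hside) as [Hxdl _].
    apply eventually_below_transfer with (laplace_quotient (reflect (extend a b V)) (- x) dl).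
    + apply (eventually_below_ext (lap_left V x dl)); auto.
      intros s; apply lap_left_reflect; auto; lra.
    + apply laplace_quotient_radius; auto. apply continuous_reflect; auto.
Qed.

Lemma major_function_restrict a b y f U : a < y <= b ->
  major_function a b f U -> major_function a y f U.
Proof.
  intros Hy HMaj. pose proof HMaj as [HU _].
  assert (HUy : continuous_on_interval a y U) by (apply (continuous_on_interval_sub a b); auto; lra).
  split; auto. intros z Hz.
  destruct (interval_radius a y z ltac:(lra) Hz) as [d [Hd [Hr Hl]]].
  destruct (major_function_eventually a b f U z ltac:(lra) HMaj ltac:(lra)) as [Er El].
  assert (Hlow : Rbar_le (Finite (f z)) (LD1_lower a y U z d)).
  { apply LD1_lower_ge_iff; [lra|auto|split; intros Hside].
    - specialize (Hr Hside). eapply eventually_above_ext; [|apply (Er ltac:(lra) d Hd ltac:(lra))].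
      intros s; symmetry; apply lap_right_extend; auto; lra.
    - specialize (Hl Hside). eapply eventually_above_ext; [|apply (El ltac:(lra) d Hd ltac:(lra))].
      intros s; symmetry; apply lap_left_reflect; auto; lra. }
  exists d. split; [apply perron_near_continuous; auto|split; auto].
  destruct (LD1_lower a y U z d); simpl in *; auto.
Qed.

Lemma minor_function_restrict a b y f V : a < y <= b ->
  minor_function a b f V -> minor_function a y f V.
Proof.
  intros Hy HMin. pose proof HMin as [HV _].
  assert (HVy : continuous_on_interval a y V) by (apply (continuous_on_interval_sub a b); auto; lra).
  split; auto. intros z Hz.
  destruct (interval_radius a y z ltac:(lra) Hz) as [d [Hd [Hr Hl]]].
  destruct (minor_function_eventually a b f V z ltac:(lra) HMin ltac:(lra)) as [Er El].
  assert (Hup : Rbar_le (LD1_upper a y V z d) (Finite (f z))).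
  { apply LD1_upper_le_iff; [lra|auto|split; intros Hside].
    - specialize (Hr Hside). eapply eventually_below_ext; [|apply (Er ltac:(lra) d Hd ltac:(lra))].
      intros s; symmetry; apply lap_right_extend; auto; lra.
    - specialize (Hl Hside). eapply eventually_below_ext; [|apply (El ltac:(lra) d Hd ltac:(lra))].
      intros s; symmetry; apply lap_left_reflect; auto; lra. }
  exists d. split; [apply perron_near_continuous; auto|split; auto].
  destruct (LD1_upper a y V z d); simpl in *; auto.
Qed.

Definition nondecreasing_on (a b : R) (G : R -> R) : Prop :=
  forall u v, a <= u <= v -> v <= b -> G u <= G v.

(* If U - V decreased on [x, y], then U - V + e t would have an interior maximum x0 for some
   small e > 0, where its right Laplace quotient is <= 0 although it tends to >= e / 2. *)
Lemma major_minus_minor_nondecreasing a b f U V : a < b ->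
  major_function a b f U -> minor_function a b f V -> nondecreasing_on a b (fun t => U t - V t).
Proof.
  intros Hab HMaj HMin x y Hx Hy.
  destruct (Req_dec x y) as [<-|Hne]; [lra|]. apply Rnot_lt_le; intro Hdec.
  pose proof (continuous_extend a b U ltac:(lra) (proj1 HMaj)) as HEU.
  pose proof (continuous_extend a b V ltac:(lra) (proj1 HMin)) as HEV.
  set (e := (U x - V x - (U y - V y)) / (2 * (y - x))).
  assert (He : 0 < e) by (apply Rdiv_lt_0_compat; lra).
  set (GV := fun t => extend a b V t - e * t).
  set (Phi := fun t => extend a b U t - GV t).
  assert (HGV : forall z, continuous GV z) by (intros z; unfold GV; solve_continuous).
  assert (HPhi : forall z, continuous Phi z) by (intros z; unfold Phi; solve_continuous).
  assert (Hxy : Phi y < Phi x).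
  { unfold Phi, GV. rewrite !extend_id by lra.
    assert (e * (y - x) = (U x - V x - (U y - V y)) / 2) by (unfold e; field; lra). lra. }
  destruct (continuous_argmax Phi x y HPhi ltac:(lra)) as [x0 [Hx0 Hmax]].
  assert (Hx0y : x0 < y) by (destruct (Req_dec x0 y) as [->|]; [specialize (Hmax x); lra|lra]).
  set (d := y - x0). assert (Hd : 0 < d) by (unfold d; lra).
  assert (Hnonpos : forall s, laplace_quotient Phi x0 d s <= 0).
  { intros s. rewrite <- (laplace_quotient_const 0 x0 d s).
    apply laplace_quotient_le; auto; [intros; apply continuous_const|lra|].
    intros t Ht. specialize (Hmax (x0 + t) ltac:(unfold d in Ht; lra)). lra. }
  pose proof (proj1 (major_function_eventually a b f U x0 Hab HMaj ltac:(lra)) ltac:(lra) d Hd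
              ltac:(unfold d; lra) (e / 8) ltac:(lra)) as HU.
  pose proof (proj1 (minor_function_eventually a b f V x0 Hab HMin ltac:(lra)) ltac:(lra) d Hd
              ltac:(unfold d; lra) (e / 8) ltac:(lra)) as HV.
  assert (Hpos : Rbar_locally p_infty (fun s => 0 < s)) by (exists 0; auto).
  destruct (filter_ex _ (filter_and _ _ HU (filter_and _ _ HV
              (filter_and _ _ (laplace_mass_large d Hd) Hpos)))) as [s [HUs [HVs [Hmass Hs]]]].
  specialize (Hnonpos s). unfold Phi, GV in Hnonpos.
  rewrite laplace_quotient_minus, (laplace_quotient_minus _ (fun t => e * t)),
    laplace_quotient_linear in Hnonpos by (auto; intros; solve_continuous).
  nra.
Qed.

Lemma Lub_Glb_Rbar_meet (A B : R -> Prop) : (exists r, A r) -> (exists r, B r) ->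
  (forall r1 r2, A r1 -> B r2 -> r1 <= r2) ->
  (forall e, 0 < e -> exists r1 r2, A r1 /\ B r2 /\ r2 - r1 < e) ->
  exists L, Lub_Rbar A = Finite L /\ Glb_Rbar B = Finite L.
Proof.
  intros [a0 Ha0] [b0 Hb0] Hle Hgap.
  destruct (Lub_Rbar_correct A) as [Hub Hlub]. destruct (Glb_Rbar_correct B) as [Hlb Hglb].
  assert (H1 : Rbar_le (Lub_Rbar A) (Finite b0)) by (apply Hlub; intros r Hr; apply Hle; auto).
  assert (H2 : Rbar_le (Finite a0) (Lub_Rbar A)) by (apply Hub; auto).
  assert (H3 : Rbar_le (Glb_Rbar B) (Finite b0)) by (apply Hlb; auto).
  assert (H4 : Rbar_le (Finite a0) (Glb_Rbar B)) by (apply Hglb; intros r Hr; apply Hle; auto).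
  destruct (Lub_Rbar A) as [L| |]; simpl in H1, H2; try contradiction.
  destruct (Glb_Rbar B) as [L'| |]; simpl in H3, H4; try contradiction.
  assert (HLL' : Rbar_le (Finite L) (Finite L')).
  { apply Hglb. intros r Hr. apply Hlub. intros r' Hr'. apply Hle; auto. }
  assert (HL'L : L' <= L).
  { apply Rnot_lt_le; intro Hlt. destruct (Hgap (L' - L) ltac:(lra)) as [r1 [r2 [Hr1 [Hr2 Hr]]]].
    pose proof (Hub r1 Hr1). pose proof (Hlb r2 Hr2). simpl in *; lra. }
  exists L. simpl in HLL'. split; [auto|f_equal; lra].
Qed.

Lemma is_laplace_gap a b f I : is_laplace a b f I -> forall e, 0 < e ->
  exists U V, major_function a b f U /\ minor_function a b f V /\
    (U b - U a) - (V b - V a) < e.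
Proof.
  intros [Hsup Hinf] e He.
  assert (HV : exists V, minor_function a b f V /\ I - e / 2 < V b - V a).
  { apply NNPP; intro Hno.
    assert (H : Rbar_le (Lub_Rbar (fun y => exists V, minor_function a b f V /\ y = V b - V a))
                        (Finite (I - e / 2))).
    { apply Lub_Rbar_correct. intros r [V [HV ->]]. apply Rnot_lt_le; intro. apply Hno; eauto. }
    rewrite Hsup in H. simpl in H. lra. }
  assert (HU : exists U, major_function a b f U /\ U b - U a < I + e / 2).
  { apply NNPP; intro Hno.
    assert (H : Rbar_le (Finite (I + e / 2))
                        (Glb_Rbar (fun y => exists U, major_function a b f U /\ y = U b - U a))).
    { apply Glb_Rbar_correct. intros r [U [HU ->]]. apply Rnot_lt_le; intro. apply Hno; eauto. }
    rewrite Hinf in H. simpl in H. lra. }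
  destruct HV as [V [HV HVI]]. destruct HU as [U [HU HUI]]. exists U, V. split; [auto|split; [auto|lra]].
Qed.

Lemma major_minor_increments a b f U V x y : a < b ->
  major_function a b f U -> minor_function a b f V -> a <= x <= y -> y <= b ->
  V y - V x <= U y - U x.
Proof.
  intros Hab HU HV Hx Hy.
  pose proof (major_minus_minor_nondecreasing a b f U V Hab HU HV x y Hx Hy). lra.
Qed.

Lemma laplace_int_restrict a b f I y : a < y <= b -> is_laplace a b f I ->
  forall U V, major_function a b f U -> minor_function a b f V ->
  V y - V a <= laplace_int a y f <= U y - U a.
Proof.
  intros Hy HI.
  set (A := fun r => exists V, minor_function a y f V /\ r = V y - V a).
  set (B := fun r => exists U, major_function a y f U /\ r = U y - U a).
  assert (HA : forall V, minor_function a b f V -> A (V y - V a))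
    by (intros V HV; exists V; split; auto; apply (minor_function_restrict a b); auto).
  assert (HB : forall U, major_function a b f U -> B (U y - U a))
    by (intros U HU; exists U; split; auto; apply (major_function_restrict a b); auto).
  destruct (is_laplace_gap a b f I HI 1 ltac:(lra)) as [U0 [V0 [HU0 [HV0 _]]]].
  destruct (Lub_Glb_Rbar_meet A B) as [L [HLA HLB]]; eauto.
  - intros r1 r2 [V [HV ->]] [U [HU ->]]. apply (major_minor_increments a y f); auto; lra.
  - intros e He. destruct (is_laplace_gap a b f I HI e He) as [U [V [HU [HV Hgap]]]].
    exists (V y - V a), (U y - U a). split; [auto|split; [auto|]].
    pose proof (major_minor_increments a b f U V y b ltac:(lra) HU HV ltac:(lra) ltac:(lra)). lra.
  - assert (HL : laplace_int a y f = L).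
    { assert (Hex : exists L', is_laplace a y f L') by (exists L; split; auto).
      destruct (epsilon_spec (inhabits 0) (fun L' => is_laplace a y f L') Hex) as [HL' _].
      fold A in HL'. unfold laplace_int. rewrite HLA in HL'. congruence. }
    intros U V HU HV. rewrite HL. split.
    + pose proof (proj1 (Lub_Rbar_correct A) _ (HA V HV)) as H. rewrite HLA in H. auto.
    + pose proof (proj1 (Glb_Rbar_correct B) _ (HB U HU)) as H. rewrite HLB in H. auto.
Qed.

Section LaplacePrimitive.

Variables (a b I : R) (f F : R -> R).
Hypothesis Hab : a < b.
Hypothesis HI : is_laplace a b f I.
Hypothesis HFa : F a = 0.
Hypothesis HF : forall x, a < x <= b -> F x = laplace_int a x f.

Lemma laplace_primitive_bounds y U V : a <= y <= b ->
  major_function a b f U -> minor_function a b f V -> V y - V a <= F y <= U y - U a.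
Proof.
  intros Hy HU HV. destruct (Req_dec y a) as [->|Hne]; [rewrite HFa; lra|].
  rewrite HF by lra. apply (laplace_int_restrict a b f I); auto; lra.
Qed.

(* Compare with a pair (U', V') whose gap e is arbitrarily small. *)
Lemma laplace_primitive_increments x y U V : a <= x <= y -> y <= b ->
  major_function a b f U -> minor_function a b f V -> V y - V x <= F y - F x <= U y - U x.
Proof.
  intros Hx Hy HU HV.
  assert (Happrox : forall e, 0 < e -> V y - V x - e <= F y - F x <= U y - U x + e).
  { intros e He. destruct (is_laplace_gap a b f I HI e He) as [U' [V' [HU' [HV' Hgap]]]].
    pose proof (laplace_primitive_bounds y U' V' ltac:(lra) HU' HV').
    pose proof (laplace_primitive_bounds x U' V' ltac:(lra) HU' HV').
    pose proof (major_minor_increments a b f U' V' a x Hab HU' HV' ltac:(lra) ltac:(lra)).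
    pose proof (major_minor_increments a b f U' V' x y Hab HU' HV' ltac:(lra) ltac:(lra)).
    pose proof (major_minor_increments a b f U' V' y b Hab HU' HV' ltac:(lra) ltac:(lra)).
    pose proof (major_minor_increments a b f U V' x y Hab HU HV' ltac:(lra) ltac:(lra)).
    pose proof (major_minor_increments a b f U' V x y Hab HU' HV ltac:(lra) ltac:(lra)).
    lra. }
  split; apply Rnot_lt_le; intro Hlt.
  - destruct (Happrox ((V y - V x - (F y - F x)) / 2) ltac:(lra)). lra.
  - destruct (Happrox ((F y - F x - (U y - U x)) / 2) ltac:(lra)). lra.
Qed.

End LaplacePrimitive.

(** * Covers by intervals *)

Fixpoint fsum (w : nat -> R) (N : nat) : R :=
  match N with O => 0 | S m => fsum w m + w m end.

Lemma fsum_ext w1 w2 N : (forall n, (n < N)%nat -> w1 n = w2 n) -> fsum w1 N = fsum w2 N.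
Proof.
  induction N; intros H; simpl; auto.
  rewrite IHN by (intros; apply H; lia). rewrite H by lia. auto.
Qed.

Lemma fsum_le w1 w2 N : (forall n, (n < N)%nat -> w1 n <= w2 n) -> fsum w1 N <= fsum w2 N.
Proof.
  induction N; intros H; simpl; [lra|].
  pose proof (IHN ltac:(intros; apply H; lia)). pose proof (H N ltac:(lia)). lra.
Qed.

Lemma fsum_nonneg w N : (forall n, 0 <= w n) -> 0 <= fsum w N.
Proof. intros H. induction N; simpl; [lra|]. pose proof (H N). lra. Qed.

Lemma fsum_plus w1 w2 N : fsum (fun n => w1 n + w2 n) N = fsum w1 N + fsum w2 N.
Proof. induction N; simpl; [ring|rewrite IHN; ring]. Qed.

Lemma fsum_scal c w N : fsum (fun n => c * w n) N = c * fsum w N.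
Proof. induction N; simpl; [ring|rewrite IHN; ring]. Qed.

Lemma fsum_update w i0 v N : (i0 < N)%nat ->
  fsum (fun i => if Nat.eqb i i0 then v else w i) N = fsum w N - w i0 + v.
Proof.
  induction N; intros Hi; [lia|simpl]. destruct (Nat.eqb_spec N i0) as [->|Hne].
  - rewrite (fsum_ext _ w); [ring|]. intros n Hn. destruct (Nat.eqb_spec n i0); [lia|auto].
  - rewrite IHN by lia. ring.
Qed.

Lemma fsum_geometric e N : 0 <= e -> fsum (fun n => e * (/ 2) ^ S n) N <= e.
Proof.
  intros He. assert (Hsum : fsum (fun n => e * (/ 2) ^ S n) N = e - e * (/ 2) ^ N).
  { induction N as [|N IH]; [simpl; ring|].
    change (fsum (fun n => e * (/ 2) ^ S n) (S N))
      with (fsum (fun n => e * (/ 2) ^ S n) N + e * (/ 2) ^ S N).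
    rewrite IH. simpl. field. }
  rewrite Hsum. assert (0 < (/ 2) ^ N) by (apply pow_lt; lra). nra.
Qed.

Lemma lensum_fsum lo hi N : lensum lo hi N = fsum (fun n => hi n - lo n) N.
Proof. induction N; simpl; auto. rewrite IHN; auto. Qed.

Lemma fsum_injective_le (phi : nat -> nat * nat) (w : nat -> nat -> R) B N :
  (forall n m, phi n = phi m -> n = m) -> (forall j i, 0 <= w j i) ->
  (forall n, (n < N)%nat -> (fst (phi n) < B)%nat /\ (snd (phi n) < B)%nat) ->
  fsum (fun n => w (fst (phi n)) (snd (phi n))) N <= fsum (fun j => fsum (w j) B) B.
Proof.
  intros Hinj. revert w. induction N as [|N IH]; intros w Hw Hbox; simpl.
  { apply fsum_nonneg. intros j. apply fsum_nonneg. auto. }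
  destruct (Hbox N ltac:(lia)) as [Hj0 Hi0].
  set (j0 := fst (phi N)) in *. set (i0 := snd (phi N)) in *.
  set (w' := fun j i => if Nat.eqb j j0 then (if Nat.eqb i i0 then 0 else w j i) else w j i).
  assert (Hw' : forall j i, 0 <= w' j i).
  { intros j i. unfold w'. destruct (Nat.eqb j j0), (Nat.eqb i i0); auto; lra. }
  assert (Hbefore : fsum (fun n => w (fst (phi n)) (snd (phi n))) N =
                    fsum (fun n => w' (fst (phi n)) (snd (phi n))) N).
  { apply fsum_ext. intros n Hn. unfold w'.
    destruct (Nat.eqb_spec (fst (phi n)) j0), (Nat.eqb_spec (snd (phi n)) i0); auto.
    assert (phi n = phi N)
      by (rewrite (surjective_pairing (phi n)), (surjective_pairing (phi N)); subst j0 i0; congruence).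
    apply Hinj in H. lia. }
  assert (Hbox' : fsum (fun j => fsum (w' j) B) B = fsum (fun j => fsum (w j) B) B - w j0 i0).
  { rewrite (fsum_ext _ (fun j => if Nat.eqb j j0 then fsum (w j0) B - w j0 i0 else fsum (w j) B)).
    - rewrite fsum_update by auto. ring.
    - intros j Hj. unfold w'. destruct (Nat.eqb_spec j j0) as [->|]; auto.
      rewrite fsum_update by auto. ring. }
  pose proof (IH w' Hw' ltac:(intros n Hn; apply Hbox; lia)). lra.
Qed.

Definition interval_cover (A : R -> Prop) (c : R) (lo hi : nat -> R) : Prop :=
  (forall n, lo n <= hi n) /\ (forall N, lensum lo hi N <= c) /\
  (forall x, A x -> exists n, lo n < x < hi n).

Lemma interval_cover_weaken A c c' lo hi : c <= c' ->
  interval_cover A c lo hi -> interval_cover A c' lo hi.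
Proof. intros Hc [H1 [H2 H3]]. split; [auto|split; [|auto]]. intros N; specialize (H2 N); lra. Qed.

Lemma interval_cover_reflect A c lo hi : interval_cover A c lo hi ->
  interval_cover (fun x => A (- x)) c (fun n => - hi n) (fun n => - lo n).
Proof.
  intros [H1 [H2 H3]]. split; [intros n; specialize (H1 n); lra|split].
  - intros N. rewrite lensum_fsum, (fsum_ext _ (fun n => hi n - lo n)) by (intros; ring).
    rewrite <- lensum_fsum; auto.
  - intros x Hx. destruct (H3 _ Hx) as [n Hn]. exists n. lra.
Qed.

(* The n-th interval of the union cover is interval i of cover j, where n = <j, i>. *)
Lemma interval_cover_union (A : nat -> R -> Prop) (c : nat -> R) C :
  (forall j, exists lo hi, interval_cover (A j) (c j) lo hi) -> (forall J, fsum c J <= C) ->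
  exists lo hi, interval_cover (fun x => exists j, A j x) C lo hi.
Proof.
  intros Hc HC.
  destruct (choice (fun j (p : (nat -> R) * (nat -> R)) => interval_cover (A j) (c j) (fst p) (snd p)))
    as [cov Hcov].
  { intros j. destruct (Hc j) as [lo [hi H]]. exists (lo, hi). auto. }
  set (w := fun j i => snd (cov j) i - fst (cov j) i).
  assert (Hw : forall j i, 0 <= w j i)
    by (intros j i; destruct (Hcov j) as [H _]; specialize (H i); unfold w; lra).
  exists (fun n => fst (cov (fst (Cantor.of_nat n))) (snd (Cantor.of_nat n))),
         (fun n => snd (cov (fst (Cantor.of_nat n))) (snd (Cantor.of_nat n))).
  split; [|split].
  - intros n. apply (Hcov (fst (Cantor.of_nat n))).
  - intros N. rewrite lensum_fsum. apply Rle_trans with (fsum (fun j => fsum (w j) N) N).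
    + apply (fsum_injective_le Cantor.of_nat w N N); auto.
      * intros n m H. rewrite <- (Cantor.cancel_to_of n), <- (Cantor.cancel_to_of m), H; auto.
      * intros n Hn.
        pose proof (Cantor.to_nat_non_decreasing (fst (Cantor.of_nat n)) (snd (Cantor.of_nat n))).
        rewrite <- surjective_pairing, Cantor.cancel_to_of in H. lia.
    + apply Rle_trans with (fsum c N); auto. apply fsum_le. intros j _.
      unfold w. rewrite <- lensum_fsum. apply (Hcov j).
  - intros x [j Hj]. destruct (proj2 (proj2 (Hcov j)) x Hj) as [i Hi].
    exists (Cantor.to_nat (j, i)). rewrite Cantor.cancel_of_to. auto.
Qed.

Lemma interval_cover_or (A B : R -> Prop) cA cB : 0 <= cA -> 0 <= cB ->
  (exists lo hi, interval_cover A cA lo hi) -> (exists lo hi, interval_cover B cB lo hi) ->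
  exists lo hi, interval_cover (fun x => A x \/ B x) (cA + cB) lo hi.
Proof.
  intros HcA HcB HA HB.
  set (fam := fun j => match j with O => A | 1%nat => B | _ => fun _ => False end).
  set (c := fun j => match j with O => cA | 1%nat => cB | _ => 0 end).
  destruct (interval_cover_union fam c (cA + cB)) as [lo [hi Hcov]].
  - intros [|[|j]]; auto. exists (fun _ => 0), (fun _ => 0).
    split; [intros; lra|split; [|simpl; tauto]].
    intros N. rewrite lensum_fsum, (fsum_ext _ (fun _ => 0 * 0)) by (intros; ring).
    rewrite fsum_scal. simpl; lra.
  - intros J. apply Rle_trans with (fsum c 2); [|simpl; lra].
    destruct J as [|[|J]]; simpl; [lra|lra|].
    assert (fsum c (S (S J)) = cA + cB) by (induction J; simpl in *; [ring|rewrite IHJ; ring]).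
    simpl in H. lra.
  - exists lo, hi. destruct Hcov as [H1 [H2 H3]]. split; [auto|split; [auto|]].
    intros x [Hx|Hx]; apply H3; [exists O|exists 1%nat]; auto.
Qed.

(** * The rising sun lemma *)

Definition steep_right (a b eta : R) (G : R -> R) (x : R) : Prop :=
  a <= x < b /\ exists y, x < y <= b /\ eta * (y - x) < G y - G x.

Definition steep_left (a b eta : R) (G : R -> R) (x : R) : Prop :=
  a < x <= b /\ exists y, a <= y < x /\ eta * (x - y) < G x - G y.

Lemma least_nat (P : nat -> Prop) : (exists n, P n) ->
  exists n, P n /\ forall m, (m < n)%nat -> ~ P m.
Proof.
  intros Hex.
  destruct (dec_inh_nat_subset_has_unique_least_element P (fun n => classic (P n)) Hex)
    as [n [[Hn Hmin] _]].
  exists n. split; auto. intros m Hm HPm. specialize (Hmin m HPm). lia.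
Qed.

Definition dense_point (a b : R) (n : nat) : R :=
  let (p, q) := Cantor.of_nat n in a + (b - a) * INR p / INR (S q).

Lemma dense_point_between a b u v : a <= u -> u < v -> v <= b ->
  exists n, u < dense_point a b n < v.
Proof.
  intros Hu Huv Hv.
  destruct (INR_unbounded ((b - a) / (v - u))) as [q Hq].
  set (N := INR (S q)). assert (HN : 0 < N) by (unfold N; apply lt_0_INR; lia).
  assert (Hstep : (b - a) / N < v - u).
  { assert (0 <= (b - a) / (v - u)) by (apply Rdiv_le_0_compat; lra).
    assert (Hq' : (b - a) / (v - u) < N) by (unfold N; rewrite S_INR; lra).
    apply Rmult_lt_reg_r with N; auto. unfold Rdiv; rewrite Rmult_assoc, Rinv_l, Rmult_1_r by lra.
    apply Rmult_lt_compat_l with (r := v - u) in Hq'; [|lra].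
    replace ((v - u) * ((b - a) / (v - u))) with (b - a) in Hq' by (field; lra). lra. }
  set (P := fun p => u < a + (b - a) * INR p / N).
  assert (HPN : P (S q)) by (unfold P; fold N; replace ((b - a) * N / N) with (b - a) by (field; lra); lra).
  destruct (least_nat P (ex_intro _ _ HPN)) as [[|p] [HPp Hmin]].
  - unfold P in HPp. simpl in HPp. unfold Rdiv in HPp. rewrite Rmult_0_r, Rmult_0_l in HPp. lra.
  - assert (Hn : ~ P p) by (apply Hmin; lia). unfold P in Hn, HPp.
    exists (Cantor.to_nat (S p, q)). unfold dense_point. rewrite Cantor.cancel_of_to. fold N.
    split; auto. rewrite S_INR in *.
    replace (a + (b - a) * (INR p + 1) / N) with (a + (b - a) * INR p / N + (b - a) / N) by (field; lra).
    lra.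
Qed.

Definition indicator (P : Prop) (r : R) : R := if excluded_middle_informative P then r else 0.

(* Induction on N: the last interval splits the others into those to its left and those to
   its right. *)
Lemma fsum_disjoint_increments (H : R -> R) (al be : nat -> R) (P : nat -> Prop) :
  (forall n, P n -> al n < be n) ->
  (forall n m, n <> m -> P n -> P m -> be n <= al m \/ be m <= al n) ->
  forall N (Q : nat -> Prop) a b, a <= b -> nondecreasing_on a b H ->
  (forall n, (n < N)%nat -> Q n -> P n /\ a <= al n /\ be n <= b) ->
  fsum (fun n => indicator (Q n) (H (be n) - H (al n))) N <= H b - H a.
Proof.
  intros Hlt Hdisj N. induction N as [|N IH]; intros Q a b Hab Hmono HQ; simpl.
  { pose proof (Hmono a b ltac:(lra) ltac:(lra)). lra. }
  unfold indicator at 2. destruct (excluded_middle_informative (Q N)) as [HN|HN].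
  2: { rewrite Rplus_0_r. apply IH; auto. }
  destruct (HQ N ltac:(lia) HN) as [HPN [HaN HbN]]. pose proof (Hlt N HPN).
  set (QL := fun n => Q n /\ be n <= al N). set (QR := fun n => Q n /\ be N <= al n).
  assert (Hsplit : fsum (fun n => indicator (Q n) (H (be n) - H (al n))) N =
                   fsum (fun n => indicator (QL n) (H (be n) - H (al n))) N +
                   fsum (fun n => indicator (QR n) (H (be n) - H (al n))) N).
  { rewrite <- fsum_plus. apply fsum_ext. intros n Hn. unfold indicator, QL, QR.
    destruct (excluded_middle_informative (Q n)) as [Hq|Hq];
    destruct (excluded_middle_informative (Q n /\ be n <= al N)) as [HL|HL];
    destruct (excluded_middle_informative (Q n /\ be N <= al n)) as [HR|HR]; try tauto; try ring.
    - destruct (HQ n ltac:(lia) Hq) as [HPn _]. pose proof (Hlt n HPn). lra.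
    - destruct (HQ n ltac:(lia) Hq) as [HPn _]. destruct (Hdisj n N ltac:(lia) HPn HPN); tauto. }
  assert (HL : fsum (fun n => indicator (QL n) (H (be n) - H (al n))) N <= H (al N) - H a).
  { apply IH; [lra|intros u v Hu Hv; apply Hmono; lra|].
    intros n Hn [Hq Hb]. destruct (HQ n ltac:(lia) Hq) as [? [? ?]]. repeat split; auto. }
  assert (HR : fsum (fun n => indicator (QR n) (H (be n) - H (al n))) N <= H b - H (be N)).
  { apply IH; [lra|intros u v Hu Hv; apply Hmono; lra|].
    intros n Hn [Hq Hb]. destruct (HQ n ltac:(lia) Hq) as [? [? ?]]. repeat split; auto. }
  lra.
Qed.

Section RisingSun.

Variables (a b eta : R) (G : R -> R).
Hypothesis Hab : a < b.
Hypothesis Heta : 0 < eta.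
Hypothesis HG : forall z, continuous G z.
Hypothesis Hmono : nondecreasing_on a b G.

Let tilt (t : R) : R := G t - eta * t.

(* Points of [a, b] not in the shadow cast by the graph of the tilted function when the
   sun rises at the right. *)
Let unshaded (t : R) : Prop := a <= t <= b /\ forall y, t < y <= b -> tilt y <= tilt t.

Let shadow (x al be : R) : Prop :=
  a <= al <= x /\ x < be /\ unshaded be /\ (unshaded al \/ al = a) /\
  forall t, al < t < be -> ~ unshaded t.

Lemma continuous_tilt : forall z, continuous tilt z.
Proof. intros z; unfold tilt; solve_continuous. Qed.

Lemma steep_shaded x : steep_right a b eta G x -> ~ unshaded x.
Proof. intros [_ [y [Hy Hsteep]]] [_ Hun]. specialize (Hun y Hy). unfold tilt in Hun. lra. Qed.

Lemma shaded_steep t : a <= t <= b -> ~ unshaded t -> steep_right a b eta G t.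
Proof.
  intros Ht Hsh. destruct (Req_dec t b) as [->|Hne].
  { exfalso; apply Hsh. split; [lra|intros; lra]. }
  split; [lra|]. apply NNPP; intro Hno. apply Hsh. split; auto. intros y Hy.
  apply Rnot_lt_le; intro. apply Hno. exists y. split; auto. unfold tilt in *; lra.
Qed.

Lemma unshaded_limit_right m : a <= m <= b ->
  (forall r, 0 < r -> exists t, unshaded t /\ m <= t < m + r) -> unshaded m.
Proof.
  intros Hm Hacc. split; auto. intros y Hy. apply Rnot_lt_le; intro Hgt.
  destruct (continuous_ball tilt m (tilt y - tilt m) (continuous_tilt m) ltac:(lra)) as [r [Hr Hball]].
  destruct (Hacc (Rmin r (y - m))) as [t [[_ Ht] Htm]]; [apply Rmin_pos; lra|].
  pose proof (Rmin_l r (y - m)). pose proof (Rmin_r r (y - m)).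
  specialize (Ht y ltac:(lra)). specialize (Hball t ltac:(rewrite Rabs_right; lra)).
  unfold Rabs in Hball; destruct Rcase_abs in Hball; lra.
Qed.

Lemma unshaded_limit_left m : a <= m <= b ->
  (forall r, 0 < r -> exists t, unshaded t /\ m - r < t <= m) -> unshaded m.
Proof.
  intros Hm Hacc. split; auto. intros y Hy. apply Rnot_lt_le; intro Hgt.
  destruct (continuous_ball tilt m (tilt y - tilt m) (continuous_tilt m) ltac:(lra)) as [r [Hr Hball]].
  destruct (Hacc r Hr) as [t [[_ Ht] Htm]].
  specialize (Ht y ltac:(lra)). specialize (Hball t ltac:(rewrite Rabs_left1; lra)).
  unfold Rabs in Hball; destruct Rcase_abs in Hball; lra.
Qed.

Lemma shadow_end_exists x : steep_right a b eta G x ->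
  exists be, unshaded be /\ x < be /\ forall t, x <= t < be -> ~ unshaded t.
Proof.
  intros Hx. pose proof (steep_shaded x Hx) as Hxs. destruct Hx as [Hxab _].
  set (S := fun u => exists t, u = - t /\ unshaded t /\ x <= t).
  assert (Hb : unshaded b) by (split; [lra|intros; lra]).
  destruct (completeness S) as [m [Hub Hlub]].
  { exists (- x). intros u [t [-> [_ Ht]]]. lra. }
  { exists (- b). exists b. split; [auto|split; [auto|lra]]. }
  assert (Hlow : forall t, unshaded t -> x <= t -> - m <= t).
  { intros t Ht Hxt. assert (- t <= m) by (apply Hub; exists t; auto). lra. }
  assert (Hgreatest : forall r, 0 < r -> exists t, unshaded t /\ x <= t < - m + r).
  { intros r Hr. apply NNPP; intro Hno. assert (m <= m - r); [|lra].
    apply Hlub. intros u [t [-> [Ht Hxt]]]. apply Rnot_lt_le; intro.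
    apply Hno. exists t; split; [auto|lra]. }
  assert (Hxm : x <= - m).
  { apply Rnot_lt_le; intro. destruct (Hgreatest (x + m)) as [t [_ Ht]]; lra. }
  assert (Hmb : - m <= b) by (apply Hlow; auto; lra).
  assert (Hm : unshaded (- m)).
  { apply unshaded_limit_right; [lra|]. intros r Hr.
    destruct (Hgreatest r Hr) as [t [Ht Htm]]. exists t. split; auto. split; [apply Hlow; [auto|lra]|lra]. }
  exists (- m). split; auto. split.
  - destruct (Req_dec x (- m)) as [Heq|]; [rewrite Heq in Hxs; contradiction|lra].
  - intros t Ht Hun. assert (- m <= t) by (apply Hlow; auto; lra). lra.
Qed.

Lemma shadow_start_exists x : steep_right a b eta G x ->
  exists al, a <= al <= x /\ (unshaded al \/ al = a) /\ forall t, al < t <= x -> ~ unshaded t.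
Proof.
  intros Hx. destruct Hx as [Hxab _].
  destruct (classic (exists t, unshaded t /\ t <= x)) as [[t0 [Ht0 Ht0x]]|Hno].
  2: { exists a. split; [lra|split; [auto|]]. intros t Ht Hun. apply Hno. exists t; split; [auto|lra]. }
  set (S := fun t => unshaded t /\ t <= x).
  destruct (completeness S) as [m [Hub Hlub]].
  { exists x. intros t [_ Ht]; auto. }
  { exists t0; split; auto. }
  assert (Hmx : m <= x) by (apply Hlub; intros t [_ Ht]; auto).
  assert (Htm : t0 <= m) by (apply Hub; split; auto).
  assert (Hm : unshaded m).
  { apply unshaded_limit_left; [destruct Ht0 as [[? ?] _]; lra|]. intros r Hr.
    apply NNPP; intro Hno. assert (m <= m - r); [|lra]. apply Hlub. intros t [Ht Htx].
    assert (t <= m) by (apply Hub; split; auto). apply Rnot_lt_le; intro. apply Hno.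
    exists t; split; [auto|lra]. }
  exists m. split; [destruct Hm as [[? ?] _]; lra|split; [auto|]].
  intros t Ht Hun. assert (t <= m) by (apply Hub; split; [auto|lra]). lra.
Qed.

Lemma shadow_exists x : steep_right a b eta G x -> exists al be, shadow x al be.
Proof.
  intros Hx. destruct (shadow_start_exists x Hx) as [al [Hal [Halun Hal_sh]]].
  destruct (shadow_end_exists x Hx) as [be [Hbe [Hxbe Hbe_sh]]].
  exists al, be. split; [lra|split; [lra|split; [auto|split; [auto|]]]].
  intros t Ht. destruct (Rle_dec t x); [apply Hal_sh|apply Hbe_sh]; lra.
Qed.

Lemma shadow_steep x al be t : shadow x al be -> al < t < be -> steep_right a b eta G t.
Proof.
  intros [Hal [Hxbe [[Hbe _] [_ Hsh]]]] Ht. apply shaded_steep; [lra|]. apply Hsh; auto.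
Qed.

Lemma shadow_disjoint x al be z al' be' : shadow x al be -> shadow z al' be' ->
  (al = al' /\ be = be') \/ be <= al' \/ be' <= al.
Proof.
  intros [Hal [Hxbe [Hbe [Halun Hsh]]]] [Hal' [Hzbe' [Hbe' [Halun' Hsh']]]].
  destruct (Rle_dec be al') as [|Hlt1]; [auto|]. destruct (Rle_dec be' al) as [|Hlt2]; [auto|].
  left. split.
  - destruct (Rtotal_order al al') as [Hlt|[|Hlt]]; auto; exfalso.
    + destruct Halun' as [Hun|Heq]; [apply (Hsh al'); auto; lra|lra].
    + destruct Halun as [Hun|Heq]; [apply (Hsh' al); auto; lra|lra].
  - destruct (Rtotal_order be be') as [Hlt|[|Hlt]]; auto; exfalso.
    + apply (Hsh' be); auto; lra.
    + apply (Hsh be'); auto; lra.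
Qed.

Lemma tilt_le_unshaded m be : unshaded be -> a <= m < be ->
  (forall t, m <= t < be -> ~ unshaded t) -> tilt m <= tilt be.
Proof.
  intros Hbe Hm Hsh.
  destruct (continuous_argmax tilt m be continuous_tilt ltac:(lra)) as [ms [Hms Hmax]].
  destruct (Req_dec ms be) as [->|Hne]; [apply Hmax; lra|exfalso].
  destruct Hbe as [[_ Hbb] Hbe].
  destruct (shaded_steep ms ltac:(lra) (Hsh ms ltac:(lra))) as [_ [y [Hy Hsteep]]].
  destruct (Rle_dec y be).
  - specialize (Hmax y ltac:(lra)). unfold tilt in Hmax. lra.
  - specialize (Hbe y ltac:(lra)). specialize (Hmax be ltac:(lra)). unfold tilt in *. lra.
Qed.

Lemma shadow_rise x al be : steep_right a b eta G x -> shadow x al be ->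
  eta * (be - al) <= G be - G al.
Proof.
  intros Hx Hshadow. pose proof Hshadow as [Hal [Hxbe [Hbe [Halun Hsh]]]].
  assert (tilt al <= tilt be); [|unfold tilt in *; lra].
  destruct (classic (unshaded al)) as [Hun|Hsh_al].
  - assert (Halx : al < x).
    { destruct (Req_dec al x) as [<-|]; [exfalso; apply (steep_shaded al Hx Hun)|lra]. }
    apply Rnot_lt_le; intro Hgt.
    destruct (continuous_ball tilt al (tilt al - tilt be) (continuous_tilt al) ltac:(lra))
      as [r [Hr Hball]].
    set (m := Rmin x (al + r / 2)).
    assert (Hm : al < m <= x /\ m - al < r) by (unfold m, Rmin; destruct Rle_dec; lra).
    specialize (Hball m ltac:(rewrite Rabs_right; lra)).
    assert (tilt m <= tilt be).
    { apply tilt_le_unshaded; auto; [lra|]. intros t Ht. apply Hsh. lra. }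
    unfold Rabs in Hball; destruct Rcase_abs in Hball; lra.
  - destruct Halun as [|Heq]; [contradiction|].
    apply tilt_le_unshaded; auto; [lra|]. intros t Ht.
    destruct (Req_dec t al) as [->|]; auto. apply Hsh. lra.
Qed.

(* Each shadow is represented by the dense point of least index lying in it. *)
Lemma rising_sun : exists (al be : nat -> R) (chosen : nat -> Prop),
  (forall n, chosen n ->
     a <= al n /\ al n < be n /\ be n <= b /\ eta * (be n - al n) <= G (be n) - G (al n)) /\
  (forall n m, n <> m -> chosen n -> chosen m -> be n <= al m \/ be m <= al n) /\
  (forall x, steep_right a b eta G x -> exists n, chosen n /\ al n <= x < be n).
Proof.
  set (pt := dense_point a b).
  destruct (choice (fun n (p : R * R) => steep_right a b eta G (pt n) -> shadow (pt n) (fst p) (snd p)))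
    as [comp Hcomp].
  { intros n. destruct (classic (steep_right a b eta G (pt n))) as [Hs|Hs].
    - destruct (shadow_exists _ Hs) as [al [be H]]. exists (al, be); auto.
    - exists (0, 0); tauto. }
  set (al := fun n => fst (comp n)). set (be := fun n => snd (comp n)).
  set (chosen := fun n => steep_right a b eta G (pt n) /\
         forall m, (m < n)%nat -> ~ (steep_right a b eta G (pt m) /\ al n <= pt m < be n)).
  assert (Hch : forall n, chosen n -> shadow (pt n) (al n) (be n)) by (intros n [Hs _]; apply Hcomp; auto).
  exists al, be, chosen. split; [|split].
  - intros n Hn. pose proof (shadow_rise _ _ _ (proj1 Hn) (Hch n Hn)).
    destruct (Hch n Hn) as [? [? [[[? ?] _] _]]]. repeat split; lra.
  - intros n m Hnm Hn Hm.
    destruct (shadow_disjoint _ _ _ _ _ _ (Hch n Hn) (Hch m Hm)) as [[Hal Hbe]|]; auto.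
    exfalso. destruct (Nat.lt_gt_cases n m) as [[Hlt|Hlt] _]; [auto| |].
    + apply (proj2 Hm n Hlt). destruct (Hch n Hn) as [? [? _]]. split; [apply Hn|lra].
    + apply (proj2 Hn m Hlt). destruct (Hch m Hm) as [? [? _]]. split; [apply Hm|lra].
  - intros x Hx. destruct (shadow_exists x Hx) as [al0 [be0 Hx0]].
    pose proof Hx0 as [Hal0 [Hxbe0 [[[_ Hbe0b] _] _]]].
    destruct (dense_point_between a b al0 be0) as [n0 Hn0]; try lra.
    set (P := fun n => steep_right a b eta G (pt n) /\ al0 <= pt n < be0).
    destruct (least_nat P) as [n [[Hsn Hn] Hmin]].
    { exists n0. split; [apply (shadow_steep x al0 be0); auto|unfold pt; lra]. }
    pose proof (Hcomp n Hsn) as Hn_sh. fold (al n) (be n) in Hn_sh.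
    assert (Hsame : al n = al0 /\ be n = be0).
    { destruct (shadow_disjoint _ _ _ _ _ _ Hn_sh Hx0) as [|[|]]; auto;
      destruct Hn_sh as [? [? _]]; exfalso; lra. }
    exists n. split; [|lra]. split; auto.
    intros m Hm [Hsm Hpm]. apply (Hmin m Hm). split; auto. lra.
Qed.

(* The n-th shadow is enlarged to the left by e / 2^(n+1) so that the cover is open. *)
Lemma steep_right_cover e : 0 < e ->
  exists lo hi, interval_cover (steep_right a b eta G) ((G b - G a) / eta + e) lo hi.
Proof.
  intros He. destruct rising_sun as [al [be [chosen [Hshadow [Hdisj Hcov]]]]].
  assert (Hp : forall n, 0 < e * (/ 2) ^ S n) by (intros; apply Rmult_lt_0_compat; [|apply pow_lt]; lra).
  exists (fun n => indicator (chosen n) (al n - e * (/ 2) ^ S n)), (fun n => indicator (chosen n) (be n)).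
  unfold indicator. split; [|split].
  - intros n. destruct excluded_middle_informative as [Hn|]; [|lra].
    specialize (Hshadow n Hn). specialize (Hp n). lra.
  - intros N. rewrite lensum_fsum.
    pose proof (fsum_disjoint_increments G al be chosen ltac:(intros n Hn; apply Hshadow in Hn; lra)
      Hdisj N chosen a b ltac:(lra) Hmono ltac:(intros n _ Hn; split; [auto|apply Hshadow in Hn; lra]))
      as Hincr.
    apply Rle_trans with
      (fsum (fun n => / eta * indicator (chosen n) (G (be n) - G (al n)) + e * (/ 2) ^ S n) N).
    + apply fsum_le. intros n _. unfold indicator.
      destruct excluded_middle_informative as [Hn|]; [|specialize (Hp n); lra].
      destruct (Hshadow n Hn) as [_ [_ [_ Hrise]]].
      assert (be n - al n <= / eta * (G (be n) - G (al n))).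
      { apply Rmult_le_reg_l with eta; auto. rewrite <- Rmult_assoc, Rinv_r; lra. }
      lra.
    + rewrite fsum_plus, fsum_scal. pose proof (fsum_geometric e N ltac:(lra)).
      assert (/ eta * fsum (fun n => indicator (chosen n) (G (be n) - G (al n))) N <= / eta * (G b - G a))
        by (apply Rmult_le_compat_l; [left; apply Rinv_0_lt_compat|]; lra).
      unfold Rdiv. lra.
  - intros x Hx. destruct (Hcov x Hx) as [n [Hn Hx_n]]. exists n.
    destruct excluded_middle_informative; [|contradiction]. specialize (Hp n). lra.
Qed.

End RisingSun.

Lemma steep_left_cover a b eta G e : a < b -> 0 < eta -> (forall z, continuous G z) ->
  nondecreasing_on a b G -> 0 < e ->
  exists lo hi, interval_cover (steep_left a b eta G) ((G b - G a) / eta + e) lo hi.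
Proof.
  intros Hab Heta HG Hmono He.
  destruct (steep_right_cover (- b) (- a) eta (reflect G) ltac:(lra) Heta (continuous_reflect G HG))
    with e as [lo [hi Hcov]]; auto.
  { intros u v Huv Hv. unfold reflect. pose proof (Hmono (- v) (- u) ltac:(lra) ltac:(lra)). lra. }
  exists (fun n => - hi n), (fun n => - lo n).
  apply interval_cover_reflect in Hcov. unfold reflect in Hcov. rewrite !Ropp_involutive in Hcov.
  destruct Hcov as [H1 [H2 H3]]. split; [auto|split; [intros N; specialize (H2 N); lra|]].
  intros x [Hx [y [Hy Hsteep]]]. apply H3. split; [lra|]. exists (- y).
  split; [lra|]. rewrite !Ropp_involutive. lra.
Qed.

Lemma laplace_quotient_squeeze (GU GF GV : R -> R) x d c eta :
  (forall z, continuous GU z) -> (forall z, continuous GF z) -> (forall z, continuous GV z) ->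
  0 < d -> 0 <= eta ->
  eventually_above (laplace_quotient GU x d) c -> eventually_below (laplace_quotient GV x d) c ->
  (forall t, 0 <= t <= d ->
     GU x - GF x <= GU (x + t) - GF (x + t) /\ GF x - GV x <= GF (x + t) - GV (x + t) /\
     GU (x + t) - GV (x + t) - (GU x - GV x) <= eta * t) ->
  forall eps, 0 < eps ->
  Rbar_locally p_infty (fun s => Rabs (laplace_quotient GF x d s - c) < eps + eta).
Proof.
  intros HU HF HV Hd Heta Habove Hbelow Hincr eps Heps.
  assert (Hpos : Rbar_locally p_infty (fun s => 0 < s)) by (exists 0; auto).
  eapply filter_imp;
    [|apply filter_and; [apply (Habove eps Heps)|apply filter_and; [apply (Hbelow eps Heps)|exact Hpos]]].
  intros s [Hs1 [Hs2 Hs]].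
  assert (HUF : 0 <= laplace_quotient (fun y => GU y - GF y) x d s <= eta).
  { apply laplace_quotient_bounds; auto; [intros z; solve_continuous|lra|].
    intros t Ht. specialize (Hincr t Ht). lra. }
  assert (HFV : 0 <= laplace_quotient (fun y => GF y - GV y) x d s <= eta).
  { apply laplace_quotient_bounds; auto; [intros z; solve_continuous|lra|].
    intros t Ht. specialize (Hincr t Ht). lra. }
  rewrite laplace_quotient_minus in HUF, HFV by auto.
  unfold Rabs; destruct Rcase_abs; lra.
Qed.

Lemma is_lim_of_approx (h : R -> R) c (r : nat -> R) m :
  (forall eps, 0 < eps -> exists k, (m <= k)%nat /\ r k < eps) ->
  (forall k, (m <= k)%nat -> forall eps, 0 < eps ->
     Rbar_locally p_infty (fun s => Rabs (h s - c) < eps + r k)) ->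
  is_lim h p_infty c.
Proof.
  intros Hr Happrox. apply is_lim_spec. intros eps.
  destruct (Hr (eps / 2)) as [k [Hk Hrk]]; [pose proof (cond_pos eps); lra|].
  eapply filter_imp; [|apply (Happrox k Hk (eps / 2)); pose proof (cond_pos eps); lra].
  intros s Hs. lra.
Qed.

Section SqueezedPrimitive.

Variables (a b : R) (f F : R -> R) (U V : nat -> R -> R).
Hypothesis Hab : a < b.
Hypothesis HU : forall k, major_function a b f (U k).
Hypothesis HV : forall k, minor_function a b f (V k).
Hypothesis HF : forall k x y, a <= x <= y -> y <= b ->
  V k y - V k x <= F y - F x <= U k y - U k x.
(* With gaps 4^-k, the rising sun bound gap / 2^-k for the slope 2^-k is summable. *)
Hypothesis Hgap : forall k, (U k b - U k a) - (V k b - V k a) <= (/ 2) ^ k * (/ 2) ^ k.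

Let W (k : nat) : R -> R := fun y => extend a b (U k) y - extend a b (V k) y.

Definition steep (k : nat) (x : R) : Prop :=
  steep_right a b ((/ 2) ^ k) (W k) x \/ steep_left a b ((/ 2) ^ k) (W k) x.

Definition exceptional (x : R) : Prop := forall m, exists k, (m <= k)%nat /\ steep k x.

Lemma continuous_W k : forall z, continuous (W k) z.
Proof.
  pose proof (continuous_extend a b (U k) ltac:(lra) (proj1 (HU k))).
  pose proof (continuous_extend a b (V k) ltac:(lra) (proj1 (HV k))).
  intros z; unfold W; solve_continuous.
Qed.

Lemma W_increment k x y : a <= x <= y -> y <= b -> W k y - W k x = (U k y - V k y) - (U k x - V k x).
Proof. intros Hx Hy. unfold W. rewrite !extend_id by lra. ring. Qed.

Lemma W_nondecreasing k : nondecreasing_on a b (W k).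
Proof.
  intros x y Hx Hy. pose proof (W_increment k x y Hx Hy). pose proof (HF k x y Hx Hy). lra.
Qed.

Lemma steep_cover k : exists lo hi, interval_cover (steep k) (4 * (/ 2) ^ k) lo hi.
Proof.
  set (eta := (/ 2) ^ k). assert (Heta : 0 < eta) by (apply pow_lt; lra).
  assert (Hratio : (W k b - W k a) / eta + eta <= 2 * eta).
  { assert ((W k b - W k a) / eta <= eta); [|lra].
    rewrite W_increment by lra. apply Rmult_le_reg_r with eta; auto.
    unfold Rdiv; rewrite Rmult_assoc, Rinv_l, Rmult_1_r by lra. specialize (Hgap k). fold eta in Hgap. lra. }
  replace (4 * eta) with (2 * eta + 2 * eta) by ring.
  apply interval_cover_or; try lra.
  - destruct (steep_right_cover a b eta (W k) Hab Heta (continuous_W k) (W_nondecreasing k) eta Heta)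
      as [lo [hi Hcov]].
    exists lo, hi. apply (interval_cover_weaken _ _ _ _ _ Hratio Hcov).
  - destruct (steep_left_cover a b eta (W k) eta Hab Heta (continuous_W k) (W_nondecreasing k) Heta)
      as [lo [hi Hcov]].
    exists lo, hi. apply (interval_cover_weaken _ _ _ _ _ Hratio Hcov).
Qed.

Lemma exceptional_null : null_set exceptional.
Proof.
  intros eps Heps.
  destruct (pow_lt_1_zero (/ 2) ltac:(rewrite Rabs_pos_eq; lra) (eps / 8) ltac:(lra)) as [m Hm].
  specialize (Hm m (le_n m)). rewrite Rabs_pos_eq in Hm by (apply pow_le; lra).
  set (C := 8 * (/ 2) ^ m).
  destruct (interval_cover_union (fun j => steep (m + j)) (fun j => C * (/ 2) ^ S j) C)
    as [lo [hi [Hlohi [Hlen Hcov]]]].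
  - intros j. destruct (steep_cover (m + j)) as [lo [hi Hcov]]. exists lo, hi.
    eapply interval_cover_weaken; [|exact Hcov]. unfold C. rewrite pow_add. simpl. lra.
  - intros J. apply fsum_geometric. unfold C. pose proof (pow_lt (/ 2) m ltac:(lra)). lra.
  - exists lo, hi. split; [auto|split; [intros N; specialize (Hlen N); unfold C in Hlen; lra|]].
    intros x Hx. apply Hcov. destruct (Hx m) as [k [Hk Hsteep]].
    exists (k - m)%nat. replace (m + (k - m))%nat with k by lia. auto.
Qed.

Lemma F_continuous : continuous_on_interval a b F.
Proof.
  intros x Hx eps Heps.
  destruct (proj1 (HU 0%nat) x Hx eps Heps) as [d1 [Hd1 HU1]].
  destruct (proj1 (HV 0%nat) x Hx eps Heps) as [d2 [Hd2 HV2]].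
  exists (Rmin d1 d2). split; [apply Rmin_pos; auto|]. intros y Hy Hyx.
  specialize (HU1 y Hy ltac:(pose proof (Rmin_l d1 d2); lra)).
  specialize (HV2 y Hy ltac:(pose proof (Rmin_r d1 d2); lra)).
  destruct (Rle_dec x y).
  - pose proof (HF 0%nat x y ltac:(lra) ltac:(lra)). unfold Rabs in *; repeat destruct Rcase_abs; lra.
  - pose proof (HF 0%nat y x ltac:(lra) ltac:(lra)). unfold Rabs in *; repeat destruct Rcase_abs; lra.
Qed.

Lemma right_quotient_estimate k x d : a <= x < b -> ~ steep k x -> 0 < d -> x + d <= b ->
  forall eps, 0 < eps ->
  Rbar_locally p_infty (fun s => Rabs (laplace_quotient (extend a b F) x d s - f x) < eps + (/ 2) ^ k).
Proof.
  intros Hx Hflat Hd Hxd.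
  apply laplace_quotient_squeeze with (GU := extend a b (U k)) (GV := extend a b (V k)); auto.
  - apply continuous_extend; [lra|apply HU].
  - apply continuous_extend; [lra|apply F_continuous].
  - apply continuous_extend; [lra|apply HV].
  - left; apply pow_lt; lra.
  - apply (proj1 (major_function_eventually a b f (U k) x Hab (HU k) ltac:(lra))); auto; lra.
  - apply (proj1 (minor_function_eventually a b f (V k) x Hab (HV k) ltac:(lra))); auto; lra.
  - intros t Ht. rewrite !extend_id by lra.
    pose proof (HF k x (x + t) ltac:(lra) ltac:(lra)). split; [lra|split; [lra|]].
    destruct (Req_dec t 0) as [->|Ht0]; [rewrite Rplus_0_r; lra|].
    apply Rnot_lt_le; intro Hlt. apply Hflat. left. split; [lra|]. exists (x + t).
    split; [lra|]. unfold W. rewrite !extend_id by lra. lra.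
Qed.

Lemma left_quotient_estimate k x d : a < x <= b -> ~ steep k x -> 0 < d -> a <= x - d ->
  forall eps, 0 < eps ->
  Rbar_locally p_infty
    (fun s => Rabs (laplace_quotient (reflect (extend a b F)) (- x) d s - f x) < eps + (/ 2) ^ k).
Proof.
  intros Hx Hflat Hd Hxd.
  apply laplace_quotient_squeeze
    with (GU := reflect (extend a b (U k))) (GV := reflect (extend a b (V k))); auto.
  - apply continuous_reflect, continuous_extend; [lra|apply HU].
  - apply continuous_reflect, continuous_extend; [lra|apply F_continuous].
  - apply continuous_reflect, continuous_extend; [lra|apply HV].
  - left; apply pow_lt; lra.
  - apply (proj2 (major_function_eventually a b f (U k) x Hab (HU k) ltac:(lra))); auto; lra.
  - apply (proj2 (minor_function_eventually a b f (V k) x Hab (HV k) ltac:(lra))); auto; lra.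
  - intros t Ht. unfold reflect. replace (- (- x + t)) with (x - t) by ring.
    rewrite Ropp_involutive, !extend_id by lra.
    pose proof (HF k (x - t) x ltac:(lra) ltac:(lra)). split; [lra|split; [lra|]].
    destruct (Req_dec t 0) as [->|Ht0]; [rewrite Rminus_0_r; lra|].
    apply Rnot_lt_le; intro Hlt. apply Hflat. right. split; [lra|]. exists (x - t).
    split; [lra|]. unfold W. rewrite !extend_id by lra. lra.
Qed.

Lemma LD1_off_exceptional x : a <= x <= b -> ~ exceptional x -> LD1 a b F x (f x).
Proof.
  intros Hx Hx_exc.
  assert (Hflat : exists m, forall k, (m <= k)%nat -> ~ steep k x).
  { apply NNPP; intro Hno. apply Hx_exc. intros m. apply NNPP; intro Hno'. apply Hno.
    exists m. intros k Hk Hsteep. apply Hno'. exists k; auto. }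
  destruct Hflat as [m Hflat].
  assert (Hsmall : forall eps, 0 < eps -> exists k, (m <= k)%nat /\ (/ 2) ^ k < eps).
  { intros eps Heps. destruct (pow_lt_1_zero (/ 2) ltac:(rewrite Rabs_pos_eq; lra) eps Heps) as [N HN].
    exists (Nat.max m N). split; [lia|]. specialize (HN (Nat.max m N) ltac:(lia)).
    rewrite Rabs_pos_eq in HN by (apply pow_le; lra). auto. }
  destruct (interval_radius a b x Hab Hx) as [d [Hd [Hr Hl]]].
  exists d. split; [apply perron_near_continuous; auto; apply F_continuous|split].
  - intros Hxb. apply (is_lim_ext (laplace_quotient (extend a b F) x d)).
    { intros s. symmetry. apply lap_right_extend; [lra|apply F_continuous|lra|lra|auto]. }
    apply (is_lim_of_approx _ _ (fun k => (/ 2) ^ k) m Hsmall).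
    intros k Hk. apply right_quotient_estimate; auto; lra.
  - intros Hax. apply (is_lim_ext (laplace_quotient (reflect (extend a b F)) (- x) d)).
    { intros s. symmetry. apply lap_left_reflect; [lra|apply F_continuous|auto|lra|lra]. }
    apply (is_lim_of_approx _ _ (fun k => (/ 2) ^ k) m Hsmall).
    intros k Hk. apply left_quotient_estimate; auto; lra.
Qed.

End SqueezedPrimitive.

Theorem theorem5p5 (a b : R) (f F : R -> R) :
  a < b ->
  laplace_integrable a b f ->
  F a = 0 ->
  (forall x, a < x <= b -> F x = laplace_int a x f) ->
  exists N : R -> Prop, null_set N /\
    forall x, a <= x <= b -> ~ N x -> LD1 a b F x (f x).
Proof.
  intros Hab [I HI] HFa HF.
  destruct (choice (fun k (p : (R -> R) * (R -> R)) =>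
      major_function a b f (fst p) /\ minor_function a b f (snd p) /\
      (fst p b - fst p a) - (snd p b - snd p a) < (/ 2) ^ k * (/ 2) ^ k)) as [UV HUV].
  { intros k. destruct (is_laplace_gap a b f I HI ((/ 2) ^ k * (/ 2) ^ k)) as [U [V HUV]].
    - pose proof (pow_lt (/ 2) k ltac:(lra)). nra.
    - exists (U, V). auto. }
  assert (HU : forall k, major_function a b f (fst (UV k))) by apply HUV.
  assert (HV : forall k, minor_function a b f (snd (UV k))) by apply HUV.
  assert (Hsq : forall k x y, a <= x <= y -> y <= b ->
      snd (UV k) y - snd (UV k) x <= F y - F x <= fst (UV k) y - fst (UV k) x).
  { intros k x y Hx Hy. apply (laplace_primitive_increments a b I f); auto. }
  assert (Hgap : forall k, (fst (UV k) b - fst (UV k) a) - (snd (UV k) b - snd (UV k) a)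
                             <= (/ 2) ^ k * (/ 2) ^ k) by (intros k; left; apply HUV).
  exists (exceptional a b (fun k => fst (UV k)) (fun k => snd (UV k))). split.
  - apply (exceptional_null a b f F); auto.
  - intros x Hx Hexc. apply (LD1_off_exceptional a b f F (fun k => fst (UV k)) (fun k => snd (UV k))); auto.
Qed.
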